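(* Let $(\mathfrak A,\mathfrak A_0)$ be a quasi *-algebra with unit $e$ and let $\omega$ be a linear functional on $\mathfrak A$ satisfying (L.1) and (L.2). The following statements are equivalent: (i) $\omega$ is representable; (ii) there exist a *-representation $\pi:\mathfrak A\to\mathcal L^\dagger(\mathcal D_\pi,\mathcal H_\pi)$ and a vector $\zeta\in\mathcal D_\pi$ such that $\omega(a)=\langle\pi(a)\zeta,\zeta\rangle$ for all $a\in\mathfrak A$; (iii) there exists a sesquilinear form $\Omega\in\mathcal Q_{\mathfrak A_0}(\mathfrak A)$ such that $\omega(a)=\Omega(a,e)$ for all $a\in\mathfrak A$; (iv) there exists a Hilbert seminorm $p$ on $\mathfrak A$ such that $|\omega(a^*x)|\le p(a)\,\omega(x^*x)^{1/2}$ for all $a\in\mathfrak A$ and $x\in\mathfrak A_0$.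
   Context: A quasi *-algebra $(\mathfrak A,\mathfrak A_0)$ consists of a complex vector space $\mathfrak A$ and a *-algebra $\mathfrak A_0$ which is a linear subspace of $\mathfrak A$, such that: $\mathfrak A$ carries an involution $a\mapsto a^*$ extending that of $\mathfrak A_0$; $\mathfrak A$ is a bimodule over $\mathfrak A_0$ whose module multiplications extend the multiplication of $\mathfrak A_0$, with $(xa)y=x(ay)$ and $a(xy)=(ax)y$ for all $a\in\mathfrak A$, $x,y\in\mathfrak A_0$; and $(ax)^*=x^*a^*$ for all $a\in\mathfrak A$, $x\in\mathfrak A_0$. A unit is an element $e\in\mathfrak A_0$ with $ae=ea=a$ for all $a\in\mathfrak A$. A linear functional $\omega$ on $\mathfrak A$ is representable if (L.1) $\omega(x^*x)\ge0$ for all $x\in\mathfrak A_0$; (L.2) $\omega(y^*a^*x)=\overline{\omega(x^*ay)}$ for all $x,y\in\mathfrak A_0$, $a\in\mathfrak A$; (L.3) for every $a\in\mathfrak A$ there is $\gamma_a>0$ with $|\omega(a^*x)|\le\gamma_a\,\omega(x^*x)^{1/2}$ for all $x\in\mathfrak A_0$. For a dense subspace $\mathcal D$ of a Hilbert space $\mathcal H$, $\mathcal L^\dagger(\mathcal D,\mathcal H)$ is the set of closable operators $X$ in $\mathcal H$ with domain $\mathcal D$ such that $\mathcal D(X^* )\supseteq\mathcal D$; set $X^\dagger=X^*\restriction_{\mathcal D}$. $X$ is a left multiplier of $Y$ if $Y\mathcal D\subseteq\mathcal D(X^{\dagger *})$ and $X^\dagger\mathcal D\subseteq\mathcal D(Y^*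 )$, and then $X\square Y:=X^{\dagger*}Y$. A *-representation of $(\mathfrak A,\mathfrak A_0)$ is a linear map $\pi:\mathfrak A\to\mathcal L^\dagger(\mathcal D_\pi,\mathcal H_\pi)$ ($\mathcal D_\pi$ dense in the Hilbert space $\mathcal H_\pi$) such that $\pi(a^* )=\pi(a)^\dagger$ for all $a$, and for $a\in\mathfrak A$, $x\in\mathfrak A_0$, $\pi(a)$ is a left multiplier of $\pi(x)$ with $\pi(a)\square\pi(x)=\pi(ax)$; if there is a unit $e$, $\pi(e)=I_{\mathcal D_\pi}$. $\mathcal Q_{\mathfrak A_0}(\mathfrak A)$ is the set of sesquilinear forms $\varphi$ on $\mathfrak A\times\mathfrak A$ with $\varphi(a,a)\ge0$ for all $a\in\mathfrak A$ and $\varphi(ax,y)=\varphi(x,a^*y)$ for all $a\in\mathfrak A$, $x,y\in\mathfrak A_0$. A Hilbert seminorm on a vector space $V$ is a seminorm $p$ with $p(a+b)^2+p(a-b)^2=2p(a)^2+2p(b)^2$ for all $a,b\in V$. *)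

From Stdlib Require Import Reals ClassicalEpsilon.
Open Scope R_scope.
Set Implicit Arguments.

Record Cx := mkC { Re : R; Im : R }.
Definition C0 : Cx := mkC 0 0.
Definition C1 : Cx := mkC 1 0.
Definition Cadd (z w : Cx) : Cx := mkC (Re z + Re w) (Im z + Im w).
Definition Cmul (z w : Cx) : Cx :=
  mkC (Re z * Re w - Im z * Im w) (Re z * Im w + Im z * Re w).
Definition Cconj (z : Cx) : Cx := mkC (Re z) (- Im z).
Definition Cabs (z : Cx) : R := sqrt (Re z * Re z + Im z * Im z).
Definition Cnonneg (z : Cx) : Prop := Im z = 0 /\ 0 <= Re z.

Record CVS := {
  vcar :> Type;
  vadd : vcar -> vcar -> vcar;
  vzero : vcar;
  vopp : vcar -> vcar;
  vscal : Cx -> vcar -> vcar;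
  vaddA : forall u v w, vadd u (vadd v w) = vadd (vadd u v) w;
  vaddC : forall u v, vadd u v = vadd v u;
  vadd0 : forall v, vadd v vzero = v;
  vaddN : forall v, vadd v (vopp v) = vzero;
  vscal1 : forall v, vscal C1 v = v;
  vscalA : forall a b v, vscal a (vscal b v) = vscal (Cmul a b) v;
  vscalDr : forall a u v, vscal a (vadd u v) = vadd (vscal a u) (vscal a v);
  vscalDl : forall a b v, vscal (Cadd a b) v = vadd (vscal a v) (vscal b v)
}.
Arguments vadd {_}. Arguments vzero {_}. Arguments vopp {_}. Arguments vscal {_}.

Definition vsub {V : CVS} (u v : V) : V := vadd u (vopp v).

Definition ipnorm {V : CVS} (ip : V -> V -> Cx) (v : V) : R := sqrt (Re (ip v v)).
Definition ip_converges {V : CVS} (ip : V -> V -> Cx) (f : nat -> V) (v : V) : Prop :=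
  forall eps, 0 < eps -> exists N, forall n, (N <= n)%nat -> ipnorm ip (vsub (f n) v) < eps.
Definition ip_cauchy {V : CVS} (ip : V -> V -> Cx) (f : nat -> V) : Prop :=
  forall eps, 0 < eps -> exists N, forall m n, (N <= m)%nat -> (N <= n)%nat ->
    ipnorm ip (vsub (f m) (f n)) < eps.

Record Hilbert := {
  hV :> CVS;
  inner : hV -> hV -> Cx;
  innerDl : forall u v w, inner (vadd u v) w = Cadd (inner u w) (inner v w);
  innerZl : forall a u w, inner (vscal a u) w = Cmul a (inner u w);
  inner_sym : forall u v, inner v u = Cconj (inner u v);
  inner_pos : forall v, Cnonneg (inner v v);
  inner_def : forall v, inner v v = C0 -> v = vzero;
  complete : forall f, ip_cauchy inner f -> exists v, ip_converges inner f v
}.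
Arguments inner {_}.

(* A single multiplication
   qmul represents both module actions (x a and a x for x in A0), which by
   definition extend the multiplication of A0; it is only constrained when at
   least one argument lies in A0. *)
Record QStarAlg := {
  qV :> CVS;
  inA0 : qV -> Prop;
  qmul : qV -> qV -> qV;
  qstar : qV -> qV;
  A0_zero : inA0 vzero;
  A0_add : forall x y, inA0 x -> inA0 y -> inA0 (vadd x y);
  A0_scal : forall k x, inA0 x -> inA0 (vscal k x);
  A0_mul : forall x y, inA0 x -> inA0 y -> inA0 (qmul x y);
  A0_star : forall x, inA0 x -> inA0 (qstar x);
  qmulDl : forall a b c, (inA0 c \/ (inA0 a /\ inA0 b)) ->
    qmul (vadd a b) c = vadd (qmul a c) (qmul b c);
  qmulDr : forall a b c, (inA0 a \/ (inA0 b /\ inA0 c)) ->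
    qmul a (vadd b c) = vadd (qmul a b) (qmul a c);
  qmulZl : forall k a b, (inA0 a \/ inA0 b) -> qmul (vscal k a) b = vscal k (qmul a b);
  qmulZr : forall k a b, (inA0 a \/ inA0 b) -> qmul a (vscal k b) = vscal k (qmul a b);
  qmulA_xya : forall x y a, inA0 x -> inA0 y -> qmul (qmul x y) a = qmul x (qmul y a);
  qmulA_xay : forall x y a, inA0 x -> inA0 y -> qmul (qmul x a) y = qmul x (qmul a y);
  qmulA_axy : forall x y a, inA0 x -> inA0 y -> qmul a (qmul x y) = qmul (qmul a x) y;
  qstarD : forall a b, qstar (vadd a b) = vadd (qstar a) (qstar b);
  qstarZ : forall k a, qstar (vscal k a) = vscal (Cconj k) (qstar a);
  qstarK : forall a, qstar (qstar a) = a;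
  qstarM : forall a x, inA0 x -> qstar (qmul a x) = qmul (qstar x) (qstar a)
}.
Arguments inA0 {_}. Arguments qmul {_}. Arguments qstar {_}.

Definition is_unit {Q : QStarAlg} (e : Q) : Prop :=
  inA0 e /\ forall a : Q, qmul a e = a /\ qmul e a = a.

Definition lin_functional {Q : QStarAlg} (w : Q -> Cx) : Prop :=
  (forall a b, w (vadd a b) = Cadd (w a) (w b)) /\
  (forall k a, w (vscal k a) = Cmul k (w a)).

Definition L1 {Q : QStarAlg} (w : Q -> Cx) : Prop :=
  forall x : Q, inA0 x -> Cnonneg (w (qmul (qstar x) x)).

Definition L2 {Q : QStarAlg} (w : Q -> Cx) : Prop :=
  forall (x y a : Q), inA0 x -> inA0 y ->
    w (qmul (qmul (qstar y) (qstar a)) x) = Cconj (w (qmul (qmul (qstar x) a) y)).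

Definition L3 {Q : QStarAlg} (w : Q -> Cx) : Prop :=
  forall a : Q, exists gamma, 0 < gamma /\
    forall x : Q, inA0 x ->
      Cabs (w (qmul (qstar a) x)) <= gamma * sqrt (Re (w (qmul (qstar x) x))).

Definition representable {Q : QStarAlg} (w : Q -> Cx) : Prop :=
  lin_functional w /\ L1 w /\ L2 w /\ L3 w.

(* An operator with domain D is a function H -> H whose values off D are
   irrelevant; operators with domain D are equal iff they agree on D. *)
Definition dense_subspace {H : Hilbert} (D : H -> Prop) : Prop :=
  D vzero /\ (forall u v, D u -> D v -> D (vadd u v)) /\
  (forall k u, D u -> D (vscal k u)) /\
  (forall v eps, 0 < eps -> exists d, D d /\ ipnorm inner (vsub v d) < eps).

Definition lin_on {H : Hilbert} (D : H -> Prop) (X : H -> H) : Prop :=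
  (forall u v, D u -> D v -> X (vadd u v) = vadd (X u) (X v)) /\
  (forall k u, D u -> X (vscal k u) = vscal k (X u)).

(* u in D(X^* ) and X^* u = w, for X with domain D *)
Definition is_adj {H : Hilbert} (D : H -> Prop) (X : H -> H) (u w : H) : Prop :=
  forall d, D d -> inner (X d) u = inner d w.

(* the adjoint X^* (its values are meaningful on D(X^* )) *)
Definition adj {H : Hilbert} (D : H -> Prop) (X : H -> H) (u : H) : H :=
  epsilon (inhabits (@vzero H)) (fun w => is_adj D X u w).

(* X^dagger = X^* restricted to D, i.e. adj D X used on D *)
Definition closable {H : Hilbert} (D : H -> Prop) (X : H -> H) : Prop :=
  forall (f : nat -> H) (w : H), (forall n, D (f n)) ->
    ip_converges inner f vzero -> ip_converges inner (fun n => X (f n)) w -> w = vzero.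

Definition in_Ldagger {H : Hilbert} (D : H -> Prop) (X : H -> H) : Prop :=
  lin_on D X /\ closable D X /\ (forall u, D u -> exists w, is_adj D X u w).

(* X is a left multiplier of Y : Y D ⊆ D(X^{dagger *}) and X^dagger D ⊆ D(Y^* ) *)
Definition left_multiplier {H : Hilbert} (D : H -> Prop) (X Y : H -> H) : Prop :=
  (forall d, D d -> exists w, is_adj D (adj D X) (Y d) w) /\
  (forall d, D d -> exists w, is_adj D Y (adj D X d) w).

Definition wprod {H : Hilbert} (D : H -> Prop) (X Y : H -> H) : H -> H :=
  fun v => adj D (adj D X) (Y v).

Definition star_rep {Q : QStarAlg} (e : Q) {H : Hilbert} (D : H -> Prop) (pi : Q -> H -> H)
  : Prop :=
  dense_subspace D /\
  (forall a, in_Ldagger D (pi a)) /\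
  (forall a b d, D d -> pi (vadd a b) d = vadd (pi a d) (pi b d)) /\
  (forall k a d, D d -> pi (vscal k a) d = vscal k (pi a d)) /\
  (forall a d, D d -> pi (qstar a) d = adj D (pi a) d) /\
  (forall a x, inA0 x ->
     left_multiplier D (pi a) (pi x) /\
     forall d, D d -> wprod D (pi a) (pi x) d = pi (qmul a x) d) /\
  (forall d, D d -> pi e d = d).

Definition sesquilinear {Q : QStarAlg} (phi : Q -> Q -> Cx) : Prop :=
  (forall a b c, phi (vadd a b) c = Cadd (phi a c) (phi b c)) /\
  (forall a b c, phi a (vadd b c) = Cadd (phi a b) (phi a c)) /\
  (forall k a b, phi (vscal k a) b = Cmul k (phi a b)) /\
  (forall k a b, phi a (vscal k b) = Cmul (Cconj k) (phi a b)).

Definition in_QA0 {Q : QStarAlg} (phi : Q -> Q -> Cx) : Prop :=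
  sesquilinear phi /\ (forall a, Cnonneg (phi a a)) /\
  (forall (a x y : Q), inA0 x -> inA0 y -> phi (qmul a x) y = phi x (qmul (qstar a) y)).

Definition hilbert_seminorm {V : CVS} (p : V -> R) : Prop :=
  (forall a, 0 <= p a) /\
  (forall a b, p (vadd a b) <= p a + p b) /\
  (forall k a, p (vscal k a) = Cabs k * p a) /\
  (forall a b, (p (vadd a b))^2 + (p (vsub a b))^2 = 2 * (p a)^2 + 2 * (p b)^2).

(* (i) implies (ii), (iii) and (iv) by the GNS construction.  On A0 the form
   <x, y> = w(y* x) is a positive semi-inner product, and (L.3) says that for
   every a in A the functional x |-> <x, a> = w(a* x) is bounded.  In the
   completion H of A0 modulo null vectors each such functional is represented by
   a vector lam(a); then pi(a) lam(x) = lam(a x) on D = lam(A0) is a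
   *-representation with zeta = lam(e), Omega(a, b) = <lam a, lam b> lies in
   Q_A0(A), and p(a) = |lam a| is a Hilbert seminorm.  Conversely each of (ii),
   (iii), (iv) yields a Cauchy-Schwarz bound |w(a* x)| <= c_a w(x* x)^(1/2),
   which is (L.3). *)

From Stdlib Require Import Reals Lra Lia Psatz ClassicalEpsilon FunctionalExtensionality
  ProofIrrelevance Classical.
Open Scope R_scope.

Lemma Cx_eq (z w : Cx) : Re z = Re w -> Im z = Im w -> z = w.
Proof. destruct z, w; simpl; intros; subst; reflexivity. Qed.

Ltac cxeq := apply Cx_eq; simpl; ring.

Definition Copp (z : Cx) : Cx := mkC (- Re z) (- Im z).

Lemma Cabs_ge0 z : 0 <= Cabs z.
Proof. apply sqrt_pos. Qed.

Lemma Cabs_conj z : Cabs (Cconj z) = Cabs z.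
Proof. unfold Cabs; simpl. f_equal. ring. Qed.

Lemma Re_le_Cabs z : Rabs (Re z) <= Cabs z.
Proof.
  unfold Cabs. rewrite <- sqrt_Rsqr_abs. apply sqrt_le_1_alt. unfold Rsqr.
  pose proof (Rle_0_sqr (Im z)); unfold Rsqr in *; lra.
Qed.

Lemma Im_le_Cabs z : Rabs (Im z) <= Cabs z.
Proof.
  unfold Cabs. rewrite <- sqrt_Rsqr_abs. apply sqrt_le_1_alt. unfold Rsqr.
  pose proof (Rle_0_sqr (Re z)); unfold Rsqr in *; lra.
Qed.

Lemma Cabs_le0 z : Cabs z <= 0 -> z = C0.
Proof.
  intro H. pose proof (Cabs_ge0 z). assert (E : Cabs z = 0) by lra.
  unfold Cabs in E. apply sqrt_eq_0 in E; [|nra].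
  apply Cx_eq; simpl; nra.
Qed.

Lemma Cabs_triangle a b : Cabs (Cadd a b) <= Cabs a + Cabs b.
Proof.
  unfold Cabs. simpl.
  set (A := Re a * Re a + Im a * Im a). set (B := Re b * Re b + Im b * Im b).
  assert (HA : 0 <= A) by (unfold A; nra). assert (HB : 0 <= B) by (unfold B; nra).
  pose proof (sqrt_sqrt A HA). pose proof (sqrt_sqrt B HB).
  pose proof (sqrt_pos A). pose proof (sqrt_pos B).
  rewrite <- (sqrt_Rsqr (sqrt A + sqrt B)) by lra.
  apply sqrt_le_1_alt. unfold Rsqr.
  assert (Re a * Re b + Im a * Im b <= sqrt A * sqrt B).
  { rewrite <- sqrt_mult by auto.
    destruct (Rle_dec (Re a * Re b + Im a * Im b) 0) as [C|C].
    - pose proof (sqrt_pos (A * B)). lra.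
    - rewrite <- (sqrt_Rsqr (Re a * Re b + Im a * Im b)) by lra. apply sqrt_le_1_alt.
      unfold Rsqr, A, B. pose proof (Rle_0_sqr (Re a * Im b - Im a * Re b)) as S.
      unfold Rsqr in S. nra. }
  replace ((Re a + Re b) * (Re a + Re b) + (Im a + Im b) * (Im a + Im b))
    with (A + B + 2 * (Re a * Re b + Im a * Im b)) by (unfold A, B; ring).
  nra.
Qed.

Lemma Cabs_le_sqrt_mul (b : Cx) (a c : R) : 0 <= a -> 0 <= c ->
  Re b * Re b + Im b * Im b <= a * c -> Cabs b <= sqrt a * sqrt c.
Proof.
  intros Ha Hc H. unfold Cabs. rewrite <- sqrt_mult by lra. apply sqrt_le_1_alt, H.
Qed.

(* The hypothesis is [a + 2 Re (t conj b) + |t|^2 c >= 0] for all [t = t1 + i t2]. *)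
Lemma discriminant_le (a b1 b2 c : R) : 0 <= a -> 0 <= c ->
  (forall t1 t2, 0 <= a + 2 * (t1 * b1 + t2 * b2) + (t1 * t1 + t2 * t2) * c) ->
  b1 * b1 + b2 * b2 <= a * c.
Proof.
  intros Ha Hc H.
  destruct (Req_dec c 0) as [E|E].
  - subst c. destruct (Req_dec (b1 * b1 + b2 * b2) 0) as [Eb|Eb]; [lra|].
    assert (Hb : 0 < b1 * b1 + b2 * b2) by nra.
    set (s := - (a + 1) / (2 * (b1 * b1 + b2 * b2))).
    specialize (H (s * b1) (s * b2)).
    assert (s * (2 * (b1 * b1 + b2 * b2)) = - (a + 1)) by (unfold s; field; lra).
    nra.
  - assert (Hc' : 0 < c) by lra.
    specialize (H (- b1 / c) (- b2 / c)).
    replace (a + 2 * (- b1 / c * b1 + - b2 / c * b2)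
               + (- b1 / c * (- b1 / c) + - b2 / c * (- b2 / c)) * c)
      with (a - (b1 * b1 + b2 * b2) / c) in H by (field; lra).
    apply Rmult_le_compat_r with (r := c) in H; [|lra].
    replace ((a - (b1 * b1 + b2 * b2) / c) * c) with (a * c - (b1 * b1 + b2 * b2))
      in H by (field; lra).
    lra.
Qed.

(* Cauchy-Schwarz for a positive sesquilinear form, read off from the values
   [A = f(x,x)], [B = f(x,y)], [B' = f(y,x)], [Cc = f(y,y)]. *)
Lemma sesquilinear_cauchy_schwarz (A B B' Cc : Cx) : Cnonneg Cc ->
  (forall k, Cnonneg (Cadd (Cadd A (Cmul (Cconj k) B))
                           (Cadd (Cmul k B') (Cmul (Cmul k (Cconj k)) Cc)))) ->
  B' = Cconj B /\ Cabs B <= sqrt (Re A) * sqrt (Re Cc).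
Proof.
  intros [HC1 HC2] Hk.
  destruct (Hk C0) as [H01 H02]. destruct (Hk C1) as [H11 _].
  destruct (Hk (mkC 0 1)) as [Hi1 _]. simpl in *.
  assert (E1 : Im B' = - Im B) by lra.
  assert (E2 : Re B' = Re B) by lra.
  split; [apply Cx_eq; simpl; lra|].
  apply Cabs_le_sqrt_mul; try lra.
  apply discriminant_le; try lra.
  intros t1 t2. destruct (Hk (mkC t1 t2)) as [_ P]. simpl in P.
  rewrite E1, E2, HC1 in P. lra.
Qed.

Lemma R0_of_small (r : R) : 0 <= r -> (forall eps, 0 < eps -> r <= eps) -> r = 0.
Proof.
  intros H1 H2. destruct (Req_dec r 0); auto.
  specialize (H2 (r / 2)). lra.
Qed.

Lemma div_succ_mul_lt (eps K : R) : 0 < eps -> 0 <= K -> eps / (K + 1) * K < eps.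
Proof.
  intros He HK. apply (Rmult_lt_reg_r (K + 1)); [lra|].
  replace (eps / (K + 1) * K * (K + 1)) with (eps * K) by (field; lra). nra.
Qed.

Lemma inv_succ_lt (eps : R) : 0 < eps -> exists N : nat, forall n, (N <= n)%nat -> / (INR n + 1) < eps.
Proof.
  intro He. destruct (archimed_cor1 eps He) as [N [HN HN0]]. exists N. intros n Hn.
  apply Rle_lt_trans with (/ INR N); auto.
  apply Rinv_le_contravar; [apply lt_0_INR; lia|].
  apply le_INR in Hn. lra.
Qed.

Lemma sqrt_le_half_succ z : 0 <= z -> sqrt z <= (1 + z) / 2.
Proof.
  intro Hz. pose proof (sqrt_sqrt z Hz). pose proof (sqrt_pos z).
  pose proof (Rle_0_sqr (sqrt z - 1)). unfold Rsqr in *. nra.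
Qed.

Lemma finite_prefix_bounded (f : nat -> R) N : exists B, forall n, (n < N)%nat -> f n <= B.
Proof.
  induction N as [|N [B HB]].
  - exists 0. intros; lia.
  - exists (Rmax B (f N)). intros n Hn.
    destruct (Nat.eq_dec n N) as [->|Hne]; [apply Rmax_r|].
    apply Rle_trans with B; [apply HB; lia|apply Rmax_l].
Qed.

Lemma Un_cv_const c : Un_cv (fun _ => c) c.
Proof. intros eps He. exists 0%nat. intros. unfold Rdist. rewrite Rminus_diag, Rabs_R0. lra. Qed.

Lemma Un_cv_ext (a b : nat -> R) l : (forall n, a n = b n) -> Un_cv a l -> Un_cv b l.
Proof. intros E H eps He. destruct (H eps He) as [N HN]. exists N. intros. rewrite <- E. auto. Qed.

Lemma Un_cv_ge0 (a : nat -> R) l : Un_cv a l -> (forall n, 0 <= a n) -> 0 <= l.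
Proof.
  intros Ha Hp. destruct (Rle_dec 0 l) as [|C]; auto. exfalso.
  destruct (Ha (- l)) as [N HN]; [lra|]. specialize (HN N (le_n N)). specialize (Hp N).
  unfold Rdist in HN. rewrite Rabs_right in HN by lra. lra.
Qed.

Lemma Un_cv_dist_le (a : nat -> R) l c r N : Un_cv a l ->
  (forall n, (N <= n)%nat -> Rabs (a n - c) <= r) -> Rabs (l - c) <= r.
Proof.
  intros Ha Hb. destruct (Rle_dec (Rabs (l - c)) r) as [|Hn]; auto.
  exfalso. destruct (Ha (Rabs (l - c) - r)) as [M HM]; [lra|].
  specialize (HM (max N M) (Nat.le_max_r _ _)). specialize (Hb (max N M) (Nat.le_max_l _ _)).
  unfold Rdist in HM.
  pose proof (Rabs_triang (a (max N M) - c) (l - a (max N M))).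
  replace (a (max N M) - c + (l - a (max N M))) with (l - c) in H by ring.
  rewrite Rabs_minus_sym in HM. lra.
Qed.

Definition clim (u : nat -> Cx) (l : Cx) : Prop :=
  Un_cv (fun n => Re (u n)) (Re l) /\ Un_cv (fun n => Im (u n)) (Im l).

Definition climv (u : nat -> Cx) : Cx := epsilon (inhabits C0) (clim u).

Lemma clim_unique u l1 l2 : clim u l1 -> clim u l2 -> l1 = l2.
Proof.
  intros [A B] [A' B']. apply Cx_eq; eapply UL_sequence; eauto.
Qed.

Lemma climv_spec u l : clim u l -> climv u = l.
Proof.
  intro H. apply (clim_unique u); auto.
  unfold climv. apply epsilon_spec. eauto.
Qed.

Lemma clim_ext u v l : (forall n, u n = v n) -> clim u l -> clim v l.
Proof. intros E [A B]. split; eapply Un_cv_ext; try eassumption; intro n; simpl; rewrite E; auto. Qed.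

Lemma clim_const c : clim (fun _ => c) c.
Proof. split; apply Un_cv_const. Qed.

Lemma clim_add u v l1 l2 : clim u l1 -> clim v l2 -> clim (fun n => Cadd (u n) (v n)) (Cadd l1 l2).
Proof. intros [A B] [C D]. split; simpl; apply CV_plus; auto. Qed.

Lemma clim_scal k u l : clim u l -> clim (fun n => Cmul k (u n)) (Cmul k l).
Proof.
  intros [A B]. split; simpl.
  - apply (CV_plus (fun n => Re k * Re (u n)) (fun n => - (Im k * Im (u n)))).
    + apply CV_mult; auto. apply Un_cv_const.
    + apply (CV_opp (fun n => Im k * Im (u n))). apply CV_mult; auto. apply Un_cv_const.
  - apply CV_plus; apply CV_mult; auto; apply Un_cv_const.
Qed.

Lemma clim_conj u l : clim u l -> clim (fun n => Cconj (u n)) (Cconj l).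
Proof. intros [A B]. split; simpl; auto. apply (CV_opp (fun n => Im (u n))). auto. Qed.

Lemma clim_opp u l : clim u l -> clim (fun n => Copp (u n)) (Copp l).
Proof.
  intros [A B]. split; simpl.
  - apply (CV_opp (fun n => Re (u n))); auto.
  - apply (CV_opp (fun n => Im (u n))); auto.
Qed.

Lemma clim0_add a b : clim a C0 -> clim b C0 -> clim (fun n => Cadd (a n) (b n)) C0.
Proof. intros A B. replace C0 with (Cadd C0 C0) by cxeq. apply clim_add; auto. Qed.

Lemma clim0_opp a : clim a C0 -> clim (fun n => Copp (a n)) C0.
Proof. intro A. replace C0 with (Copp C0) by (unfold Copp; cxeq). apply clim_opp; auto. Qed.

Lemma clim0_conj a : clim a C0 -> clim (fun n => Cconj (a n)) C0.
Proof. intro A. replace C0 with (Cconj C0) by cxeq. apply clim_conj; auto. Qed.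

Lemma clim_of_sub0 u v l : clim v l -> clim (fun n => Cadd (u n) (Copp (v n))) C0 -> clim u l.
Proof.
  intros Hv Hd. apply (clim_ext (fun n => Cadd (Cadd (u n) (Copp (v n))) (v n))).
  { intro n. cxeq. }
  replace l with (Cadd C0 l) by cxeq. apply clim_add; auto.
Qed.

Lemma clim0_of_parts u : (forall eps, 0 < eps -> exists N, forall n, (N <= n)%nat ->
  Rabs (Re (u n)) <= eps /\ Rabs (Im (u n)) <= eps) -> clim u C0.
Proof.
  intro H. split; intros eps He; destruct (H (eps / 2)) as [N HN]; try lra; exists N; intros n Hn;
  unfold Rdist; simpl; rewrite Rminus_0_r; specialize (HN n Hn); lra.
Qed.

Lemma clim0_of_Cabs u : (forall eps, 0 < eps -> exists N, forall n, (N <= n)%nat ->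
  Cabs (u n) <= eps) -> clim u C0.
Proof.
  intro H. apply clim0_of_parts. intros eps He. destruct (H eps He) as [N HN].
  exists N. intros n Hn. specialize (HN n Hn).
  pose proof (Re_le_Cabs (u n)). pose proof (Im_le_Cabs (u n)). lra.
Qed.

Lemma clim_of_cauchy u : (forall eps, 0 < eps -> exists N, forall m n, (N <= m)%nat -> (N <= n)%nat ->
   Cabs (Cadd (u m) (Copp (u n))) < eps) -> exists l, clim u l.
Proof.
  intro H.
  assert (CR : Cauchy_crit (fun n => Re (u n))).
  { intros eps He. destruct (H eps He) as [N HN]. exists N. intros n m Hn Hm.
    pose proof (Re_le_Cabs (Cadd (u n) (Copp (u m)))). specialize (HN n m Hn Hm).
    simpl in *. unfold Rdist, Rminus. lra. }
  assert (CI : Cauchy_crit (fun n => Im (u n))).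
  { intros eps He. destruct (H eps He) as [N HN]. exists N. intros n m Hn Hm.
    pose proof (Im_le_Cabs (Cadd (u n) (Copp (u m)))). specialize (HN n m Hn Hm).
    simpl in *. unfold Rdist, Rminus. lra. }
  destruct (R_complete _ CR) as [a Ha]. destruct (R_complete _ CI) as [b Hb].
  exists (mkC a b). split; auto.
Qed.

Arguments vaddA {_}. Arguments vaddC {_}. Arguments vadd0 {_}. Arguments vaddN {_}.
Arguments vscal1 {_}. Arguments vscalA {_}. Arguments vscalDr {_}. Arguments vscalDl {_}.

Section VectorSpace.
Context {V : CVS}.

Lemma vadd_self_zero (x : V) : vadd x x = x -> x = vzero.
Proof.
  intro H. transitivity (vadd (vadd x x) (vopp x)).
  - rewrite <- vaddA, vaddN, vadd0. reflexivity.
  - rewrite H. apply vaddN.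
Qed.

Lemma vscal0 (v : V) : vscal C0 v = vzero.
Proof. apply vadd_self_zero. rewrite <- vscalDl. f_equal. cxeq. Qed.

Lemma vscal_zero k : vscal k (@vzero V) = vzero.
Proof. apply vadd_self_zero. rewrite <- vscalDr, vadd0. reflexivity. Qed.

Lemma vadd0l (v : V) : vadd vzero v = v.
Proof. rewrite vaddC; apply vadd0. Qed.

Lemma vopp_scal (v : V) : vopp v = vscal (mkC (-1) 0) v.
Proof.
  assert (H : vadd v (vscal (mkC (-1) 0) v) = vzero).
  { rewrite <- (vscal1 v) at 1. rewrite <- vscalDl.
    replace (Cadd C1 (mkC (-1) 0)) with C0 by cxeq. apply vscal0. }
  rewrite <- (vadd0 (vopp v)), <- H, vaddA, (vaddC (vopp v) v), vaddN. apply vadd0l.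
Qed.

Lemma vsub_self (a : V) : vsub a a = vzero.
Proof. apply vaddN. Qed.

Lemma vsub_add_cancel (a b : V) : vadd (vsub a b) b = a.
Proof. unfold vsub. rewrite <- vaddA, (vaddC (vopp b) b), vaddN, vadd0. reflexivity. Qed.

Lemma vsub_eq0 (a b : V) : vsub a b = vzero -> a = b.
Proof. intro E. rewrite <- (vsub_add_cancel a b), E. apply vadd0l. Qed.

Lemma vsub_chain (a b c : V) : vsub a c = vadd (vsub a b) (vsub b c).
Proof.
  unfold vsub. rewrite vaddA. rewrite <- (vaddA a (vopp b) b).
  rewrite (vaddC (vopp b) b), vaddN, vadd0. reflexivity.
Qed.

Lemma vscal_sub k (a b : V) : vscal k (vsub a b) = vsub (vscal k a) (vscal k b).
Proof. unfold vsub. rewrite vscalDr, !vopp_scal, !vscalA. f_equal. f_equal. cxeq. Qed.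

Lemma vsub_swap (a b : V) : vsub a b = vscal (mkC (-1) 0) (vsub b a).
Proof.
  rewrite vscal_sub, <- !vopp_scal. unfold vsub. rewrite vaddC. f_equal.
  rewrite (vopp_scal (vopp a)), vopp_scal, vscalA.
  replace (Cmul (mkC (-1) 0) (mkC (-1) 0)) with C1 by cxeq. symmetry. apply vscal1.
Qed.

Lemma vsub_addadd (a b c d : V) : vsub (vadd a b) (vadd c d) = vadd (vsub a c) (vsub b d).
Proof.
  unfold vsub. rewrite !vopp_scal, vscalDr, <- !vaddA. f_equal.
  rewrite !vaddA. f_equal. apply vaddC.
Qed.

End VectorSpace.

Record is_inner_product {V : CVS} (ip : V -> V -> Cx) : Prop := {
  ip_addl : forall u v w, ip (vadd u v) w = Cadd (ip u w) (ip v w);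
  ip_scall : forall a u w, ip (vscal a u) w = Cmul a (ip u w);
  ip_sym : forall u v, ip v u = Cconj (ip u v);
  ip_pos : forall v, Cnonneg (ip v v);
  ip_def : forall v, ip v v = C0 -> v = vzero }.
Arguments ip_addl {V ip}. Arguments ip_scall {V ip}. Arguments ip_sym {V ip}.
Arguments ip_pos {V ip}. Arguments ip_def {V ip}.

Lemma Hilbert_inner_product (H : Hilbert) : is_inner_product (@inner H).
Proof. destruct H; constructor; assumption. Qed.

Lemma ipnorm_ge0 {V : CVS} (ip : V -> V -> Cx) (v : V) : 0 <= ipnorm ip v.
Proof. apply sqrt_pos. Qed.

Section InnerProduct.
Context {V : CVS} {ip : V -> V -> Cx} (ipH : is_inner_product ip).
Local Notation nrm := (ipnorm ip).

Lemma ip_addr (u v w : V) : ip u (vadd v w) = Cadd (ip u v) (ip u w).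
Proof. rewrite !(ip_sym ipH _ u), ip_addl by exact ipH. cxeq. Qed.

Lemma ip_scalr k (u v : V) : ip u (vscal k v) = Cmul (Cconj k) (ip u v).
Proof. rewrite !(ip_sym ipH _ u), ip_scall by exact ipH. cxeq. Qed.

Lemma ip_subl (u v d : V) : ip (vsub u v) d = Cadd (ip u d) (Copp (ip v d)).
Proof. unfold vsub. rewrite ip_addl, vopp_scal, ip_scall by exact ipH. unfold Copp. cxeq. Qed.

Lemma ip_zerol (v : V) : ip vzero v = C0.
Proof. rewrite <- (vscal0 vzero), ip_scall by exact ipH. cxeq. Qed.

Lemma ip_Re_ge0 (v : V) : 0 <= Re (ip v v).
Proof. apply (ip_pos ipH v). Qed.

Lemma ipnorm_sq (v : V) : nrm v * nrm v = Re (ip v v).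
Proof. apply sqrt_sqrt, ip_Re_ge0. Qed.

Lemma ipnorm_eq0 (v : V) : nrm v = 0 -> v = vzero.
Proof.
  intro E. apply (ip_def ipH). pose proof (ipnorm_sq v) as H0. rewrite E in H0.
  apply Cx_eq; simpl; [lra|apply (ip_pos ipH v)].
Qed.

Lemma cauchy_schwarz (u v : V) : Cabs (ip u v) <= nrm u * nrm v.
Proof.
  refine (proj2 (sesquilinear_cauchy_schwarz _ _ (ip v u) _ (ip_pos ipH v) _)).
  intro k. pose proof (ip_pos ipH (vadd u (vscal k v))) as P.
  rewrite ip_addl, !ip_addr, !ip_scall, !ip_scalr in P by exact ipH.
  replace (Cmul (Cmul k (Cconj k)) (ip v v)) with (Cmul k (Cmul (Cconj k) (ip v v))) by cxeq.
  exact P.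
Qed.

Lemma ipnorm_scal k (v : V) : nrm (vscal k v) = Cabs k * nrm v.
Proof.
  unfold ipnorm, Cabs. rewrite ip_scall, ip_scalr by exact ipH.
  rewrite <- sqrt_mult; [|nra|apply ip_Re_ge0].
  f_equal. simpl. rewrite (proj1 (ip_pos ipH v)). ring.
Qed.

Lemma ipnorm_triangle (u v : V) : nrm (vadd u v) <= nrm u + nrm v.
Proof.
  pose proof (ipnorm_ge0 ip u). pose proof (ipnorm_ge0 ip v).
  unfold ipnorm at 1. rewrite <- (sqrt_Rsqr (nrm u + nrm v)) by lra.
  apply sqrt_le_1_alt. unfold Rsqr.
  rewrite ip_addl, !ip_addr, (ip_sym ipH u v) by exact ipH. simpl.
  pose proof (ipnorm_sq u). pose proof (ipnorm_sq v).
  pose proof (cauchy_schwarz u v). pose proof (Re_le_Cabs (ip u v)).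
  pose proof (Rle_abs (Re (ip u v))). nra.
Qed.

Lemma ipnorm_sub_triangle (a b c : V) : nrm (vsub a c) <= nrm (vsub a b) + nrm (vsub b c).
Proof. rewrite (vsub_chain a b c). apply ipnorm_triangle. Qed.

Lemma ipnorm_sub_sym (a b : V) : nrm (vsub a b) = nrm (vsub b a).
Proof.
  rewrite (vsub_swap a b), ipnorm_scal. unfold Cabs; simpl.
  replace (-1 * -1 + 0 * 0) with 1 by ring. rewrite sqrt_1. ring.
Qed.

Lemma ipnorm_parallelogram (a b : V) :
  (nrm (vadd a b))^2 + (nrm (vsub a b))^2 = 2 * (nrm a)^2 + 2 * (nrm b)^2.
Proof.
  simpl. rewrite !Rmult_1_r, !ipnorm_sq. unfold vsub. rewrite (vopp_scal b).
  rewrite !ip_addl, !ip_addr, !ip_scall, !ip_scalr by exact ipH. simpl. ring.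
Qed.

Lemma ip_cvg_l (f : nat -> V) v d :
  ip_converges ip f v -> clim (fun n => ip (f n) d) (ip v d).
Proof.
  intro Hf. apply (clim_of_sub0 _ _ _ (clim_const _)).
  apply clim0_of_Cabs. intros eps He. pose proof (ipnorm_ge0 ip d).
  destruct (Hf (eps / (nrm d + 1))) as [N HN]; [apply Rdiv_lt_0_compat; lra|].
  exists N. intros n Hn. rewrite <- ip_subl.
  specialize (HN n Hn). pose proof (cauchy_schwarz (vsub (f n) v) d).
  pose proof (div_succ_mul_lt eps (nrm d) He ltac:(lra)). nra.
Qed.

End InnerProduct.

(** * Adjoints of densely defined operators *)

Section Adjoint.
Context {H : Hilbert} {D : H -> Prop} (HD : dense_subspace D).
Let ipH := Hilbert_inner_product H.

Lemma orthogonal_dense_zero (w : H) : (forall d, D d -> inner d w = C0) -> w = vzero.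
Proof.
  destruct HD as [_ [_ [_ Dd]]]. intro Hz. apply (ipnorm_eq0 ipH).
  pose proof (ipnorm_ge0 inner w) as Hw.
  apply R0_of_small; auto. intros eps Heps.
  destruct (Dd w eps Heps) as [d [Hd Hn]].
  (* [<w - d, w> = <w, w>] bounds [|w|^2] by [|w - d| |w|] *)
  assert (E : inner (vsub w d) w = inner w w).
  { rewrite (ip_subl ipH), (Hz d Hd). cxeq. }
  pose proof (cauchy_schwarz ipH (vsub w d) w) as C. rewrite E in C.
  pose proof (Re_le_Cabs (inner w w)). rewrite <- (ipnorm_sq ipH) in H0.
  pose proof (Rle_abs (ipnorm inner w * ipnorm inner w)).
  destruct (Req_dec (ipnorm inner w) 0) as [Z|Z]; [lra|].
  assert (ipnorm inner w <= ipnorm inner (vsub w d)).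
  { apply Rmult_le_reg_r with (ipnorm inner w); lra. }
  lra.
Qed.

Lemma is_adj_unique X u w1 w2 : is_adj D X u w1 -> is_adj D X u w2 -> w1 = w2.
Proof.
  intros A1 A2. apply vsub_eq0, orthogonal_dense_zero.
  intros d Hd. unfold vsub. rewrite (ip_addr ipH), vopp_scal, (ip_scalr ipH).
  rewrite <- (A1 d Hd), <- (A2 d Hd). cxeq.
Qed.

Lemma adj_spec X u : (exists w, is_adj D X u w) -> is_adj D X u (adj D X u).
Proof. intros [w Hw]. unfold adj. apply epsilon_spec. exists w; exact Hw. Qed.

Lemma adj_eq X u w : is_adj D X u w -> adj D X u = w.
Proof. intro Hw. apply (is_adj_unique X u); auto. apply adj_spec. exists w; auto. Qed.

Lemma closable_of_adjoint X : (forall u, D u -> exists w, is_adj D X u w) -> closable D X.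
Proof.
  intros Had f w Hf Hf0 HXf. apply orthogonal_dense_zero. intros d Hd.
  destruct (Had d Hd) as [a Ha].
  (* [<w, d> = lim <X f_n, d> = lim <f_n, a> = <0, a>] *)
  assert (Z : inner w d = C0).
  { rewrite <- (ip_zerol ipH a).
    apply (clim_unique (fun n => inner (X (f n)) d)); [exact (ip_cvg_l ipH _ _ d HXf)|].
    apply (clim_ext (fun n => inner (f n) a)); [intro n; symmetry; apply Ha, Hf|].
    exact (ip_cvg_l ipH _ _ a Hf0). }
  rewrite (ip_sym ipH w d), Z. cxeq.
Qed.

End Adjoint.

(** * Consequences of (ii), (iii) and (iv) *)

Arguments A0_zero {_}. Arguments A0_add {_}. Arguments A0_scal {_}. Arguments A0_mul {_}.
Arguments A0_star {_}. Arguments qmulDl {_}. Arguments qmulDr {_}. Arguments qmulZl {_}.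
Arguments qmulZr {_}. Arguments qmulA_xya {_}. Arguments qmulA_xay {_}. Arguments qmulA_axy {_}.
Arguments qstarD {_}. Arguments qstarZ {_}. Arguments qstarK {_}. Arguments qstarM {_}.

Lemma unit_star {Q : QStarAlg} (e : Q) : is_unit e -> qstar e = e.
Proof.
  intros [He0 Hu]. pose proof (qstarM (qstar e) e He0) as E.
  rewrite qstarK, (proj1 (Hu (qstar e))), qstarK in E. symmetry. exact E.
Qed.

Section Sufficiency.
Context {Q : QStarAlg} {e : Q} {w : Q -> Cx} (He : is_unit e).

Lemma L3_of_star_rep {H : Hilbert} {D : H -> Prop} {pi : Q -> H -> H} {zeta : H} :
  star_rep e D pi -> D zeta -> (forall a, w a = inner (pi a zeta) zeta) -> L3 w.
Proof.
  intros [HD [_ [_ [_ [Hst [Hmul _]]]]]] Hz Hwa.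
  pose proof (Hilbert_inner_product H) as ipH.
  assert (key : forall b x, inA0 x -> w (qmul b x) = inner (pi x zeta) (adj D (pi b) zeta)).
  { intros b x Hx. rewrite Hwa. destruct (Hmul b x Hx) as [[LM1 _] Wp].
    rewrite <- (Wp zeta Hz). unfold wprod.
    pose proof (adj_spec (adj D (pi b)) (pi x zeta) (LM1 zeta Hz) zeta Hz) as A.
    rewrite (ip_sym ipH zeta), <- A, (ip_sym ipH (pi x zeta)). cxeq. }
  intro a. exists (ipnorm inner (pi a zeta) + 1).
  pose proof (ipnorm_ge0 inner (pi a zeta)). split; [lra|].
  intros x Hx. rewrite !key by auto. rewrite <- !Hst, !qstarK by auto.
  pose proof (cauchy_schwarz ipH (pi x zeta) (pi a zeta)).
  change (sqrt (Re (inner (pi x zeta) (pi x zeta)))) with (ipnorm inner (pi x zeta)).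
  pose proof (ipnorm_ge0 inner (pi x zeta)). nra.
Qed.

Lemma L3_of_QA0 {Om : Q -> Q -> Cx} : in_QA0 Om -> (forall a, w a = Om a e) -> L3 w.
Proof.
  intros [[SDl [SDr [SZl SZr]]] [Spos Sm]] Hwa. destruct He as [He0 Hu].
  intro a.
  assert (CSa : forall x, Cabs (Om x a) <= sqrt (Re (Om x x)) * sqrt (Re (Om a a))).
  { intro x. refine (proj2 (sesquilinear_cauchy_schwarz _ _ (Om a x) _ (Spos a) _)).
    intro k. pose proof (Spos (vadd x (vscal k a))) as P.
    rewrite SDl, !SDr, !SZl, !SZr in P.
    replace (Cmul (Cmul k (Cconj k)) (Om a a)) with (Cmul k (Cmul (Cconj k) (Om a a))) by cxeq.
    exact P. }
  exists (sqrt (Re (Om a a)) + 1). pose proof (sqrt_pos (Re (Om a a))). split; [lra|].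
  intros x Hx. rewrite !Hwa, !Sm, !qstarK, (proj1 (Hu a)), (proj1 (Hu x)) by auto.
  pose proof (CSa x). pose proof (sqrt_pos (Re (Om x x))). nra.
Qed.

Lemma L3_of_hilbert_seminorm {p : Q -> R} : hilbert_seminorm p ->
  (forall (a x : Q), inA0 x ->
     Cabs (w (qmul (qstar a) x)) <= p a * sqrt (Re (w (qmul (qstar x) x)))) ->
  L3 w.
Proof.
  intros [Hp _] Hb a. exists (p a + 1). pose proof (Hp a). split; [lra|].
  intros x Hx. pose proof (Hb a x Hx). pose proof (sqrt_pos (Re (w (qmul (qstar x) x)))). nra.
Qed.

End Sufficiency.

(** * The GNS semi-inner product on A0 *)

Section GNS.
Context {Q : QStarAlg} {e : Q} {w : Q -> Cx}.
Hypotheses (He : is_unit e) (Hw : lin_functional w) (H1 : L1 w) (H2 : L2 w) (H3 : L3 w).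

Lemma A0_sub (x y : Q) : inA0 x -> inA0 y -> inA0 (vsub x y).
Proof. intros. apply A0_add; auto. rewrite vopp_scal. apply A0_scal; auto. Qed.

Lemma qmul_zero_r (a : Q) : qmul a vzero = vzero.
Proof.
  rewrite <- (vscal0 (@vzero Q)), qmulZr by (right; apply A0_zero). now rewrite !vscal0.
Qed.

Lemma w_zero : w vzero = C0.
Proof. rewrite <- (vscal0 (@vzero Q)), (proj2 Hw). cxeq. Qed.

Lemma L2_conj_sym (b h : Q) : inA0 h -> w (qmul (qstar b) h) = Cconj (w (qmul (qstar h) b)).
Proof.
  intro Hh. destruct He as [He0 Hu].
  pose proof (H2 h e b Hh He0) as E. rewrite (unit_star e He) in E.
  rewrite (proj2 (Hu (qstar b))), (proj1 (Hu (qmul (qstar h) b))) in E. exact E.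
Qed.

Definition sip (x y : Q) : Cx := w (qmul (qstar y) x).
Definition snorm2 (x : Q) : R := Re (sip x x).
Definition snorm (x : Q) : R := sqrt (snorm2 x).

Lemma sip_addl x1 x2 y : inA0 y -> sip (vadd x1 x2) y = Cadd (sip x1 y) (sip x2 y).
Proof. intro. unfold sip. rewrite qmulDr by (left; apply A0_star; auto). apply Hw. Qed.

Lemma sip_addl_A0 x1 x2 y : inA0 x1 -> inA0 x2 -> sip (vadd x1 x2) y = Cadd (sip x1 y) (sip x2 y).
Proof. intros. unfold sip. rewrite qmulDr by (right; auto). apply Hw. Qed.

Lemma sip_scall k x y : inA0 y -> sip (vscal k x) y = Cmul k (sip x y).
Proof. intro. unfold sip. rewrite qmulZr by (left; apply A0_star; auto). apply Hw. Qed.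

Lemma sip_scall_A0 k x y : inA0 x -> sip (vscal k x) y = Cmul k (sip x y).
Proof. intro. unfold sip. rewrite qmulZr by (right; auto). apply Hw. Qed.

Lemma sip_addr x y1 y2 : inA0 x -> sip x (vadd y1 y2) = Cadd (sip x y1) (sip x y2).
Proof. intro. unfold sip. rewrite qstarD, qmulDl by (left; auto). apply Hw. Qed.

Lemma sip_scalr k x y : inA0 x -> sip x (vscal k y) = Cmul (Cconj k) (sip x y).
Proof. intro. unfold sip. rewrite qstarZ, qmulZl by (right; auto). apply Hw. Qed.

Lemma sip_sym b h : inA0 h -> sip h b = Cconj (sip b h).
Proof. apply L2_conj_sym. Qed.

Lemma sip_zerol y : sip vzero y = C0.
Proof. unfold sip. rewrite qmul_zero_r. apply w_zero. Qed.

Lemma sip_subl x1 x2 y : inA0 y -> sip (vsub x1 x2) y = Cadd (sip x1 y) (Copp (sip x2 y)).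
Proof. intro. unfold vsub. rewrite sip_addl, vopp_scal, sip_scall by auto. unfold Copp. cxeq. Qed.

Lemma sip_subl_A0 x1 x2 y : inA0 x1 -> inA0 x2 ->
  sip (vsub x1 x2) y = Cadd (sip x1 y) (Copp (sip x2 y)).
Proof.
  intros. unfold vsub. rewrite vopp_scal, sip_addl_A0, sip_scall_A0 by (auto; apply A0_scal; auto).
  unfold Copp. cxeq.
Qed.

Lemma sip_subr x y1 y2 : inA0 x -> sip x (vsub y1 y2) = Cadd (sip x y1) (Copp (sip x y2)).
Proof. intro. unfold vsub. rewrite sip_addr, vopp_scal, sip_scalr by auto. unfold Copp. cxeq. Qed.

Lemma sip_self_real x : inA0 x -> Im (sip x x) = 0.
Proof. intro Hx. exact (proj1 (H1 x Hx)). Qed.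

Lemma snorm2_ge0 x : inA0 x -> 0 <= snorm2 x.
Proof. intro Hx. apply (H1 x Hx). Qed.

Lemma snorm_ge0 x : 0 <= snorm x.
Proof. apply sqrt_pos. Qed.

Lemma snorm_sq x : inA0 x -> snorm x * snorm x = snorm2 x.
Proof. intro. apply sqrt_sqrt, snorm2_ge0; auto. Qed.

Lemma snorm_lt x eps : inA0 x -> 0 < eps -> snorm2 x < eps * eps -> snorm x < eps.
Proof.
  intros Hx He' Hn. unfold snorm. rewrite <- (sqrt_Rsqr eps) by lra.
  apply sqrt_lt_1_alt. split; [apply snorm2_ge0; auto|exact Hn].
Qed.

Lemma sip_expand x y k : inA0 x -> inA0 y ->
  sip (vadd x (vscal k y)) (vadd x (vscal k y)) =
  Cadd (Cadd (sip x x) (Cmul (Cconj k) (sip x y)))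
       (Cadd (Cmul k (sip y x)) (Cmul (Cmul k (Cconj k)) (sip y y))).
Proof.
  intros Hx Hy. assert (inA0 (vscal k y)) by (apply A0_scal; auto).
  rewrite sip_addl, !sip_addr, !sip_scall, !sip_scalr by (auto; apply A0_add; auto). cxeq.
Qed.

Lemma sip_cauchy_schwarz x y : inA0 x -> inA0 y -> Cabs (sip x y) <= snorm x * snorm y.
Proof.
  intros Hx Hy.
  refine (proj2 (sesquilinear_cauchy_schwarz _ _ (sip y x) _ (H1 y Hy) _)).
  intro k. rewrite <- sip_expand by auto. apply H1, A0_add; auto. apply A0_scal; auto.
Qed.

Lemma snorm2_scal k x : inA0 x -> snorm2 (vscal k x) = (Re k * Re k + Im k * Im k) * snorm2 x.
Proof.
  intro Hx. unfold snorm2. rewrite sip_scall, sip_scalr by (auto; apply A0_scal; auto).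
  simpl. rewrite (sip_self_real x Hx). ring.
Qed.

Lemma snorm2_parallelogram x y : inA0 x -> inA0 y ->
  snorm2 (vadd x y) + snorm2 (vsub x y) = 2 * snorm2 x + 2 * snorm2 y.
Proof.
  intros Hx Hy. unfold snorm2, vsub. rewrite vopp_scal.
  assert (inA0 (vscal (mkC (-1) 0) y)) by (apply A0_scal; auto).
  rewrite (sip_addl x y), (sip_addl x (vscal _ y)) by (apply A0_add; auto).
  rewrite !sip_addr, !sip_scall, !sip_scalr by auto. simpl. ring.
Qed.

Lemma snorm2_add_le x y : inA0 x -> inA0 y -> snorm2 (vadd x y) <= 2 * snorm2 x + 2 * snorm2 y.
Proof.
  intros Hx Hy. pose proof (snorm2_parallelogram x y Hx Hy).
  pose proof (snorm2_ge0 (vsub x y) (A0_sub x y Hx Hy)). lra.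
Qed.

Lemma sip_bounded (b : Q) : exists g, 0 < g /\ forall h, inA0 h -> Cabs (sip h b) <= g * snorm h.
Proof. exact (H3 b). Qed.

Lemma sip_null_l z b : inA0 z -> snorm2 z = 0 -> sip z b = C0.
Proof.
  intros Hz E. destruct (sip_bounded b) as [g [Hg Hb]]. apply Cabs_le0.
  specialize (Hb z Hz). unfold snorm in Hb. rewrite E, sqrt_0 in Hb. lra.
Qed.

Definition A0_cauchy (y : nat -> Q) : Prop :=
  forall eps, 0 < eps -> exists N, forall m n, (N <= m)%nat -> (N <= n)%nat ->
    snorm2 (vsub (y m) (y n)) < eps.

(* A bounded functional on A0 is represented, in the limit, by a Cauchy sequence:
   [M x_n] for a maximizing sequence [x_n] of [Re L] on the unit ball, [M] the
   supremum.  This replaces the Riesz lemma, since A0 is not complete. *)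
Section Riesz.
Variables (L : Q -> Cx) (g : R).
Hypothesis Ladd : forall x y, inA0 x -> inA0 y -> L (vadd x y) = Cadd (L x) (L y).
Hypothesis Lscal : forall k x, inA0 x -> L (vscal k x) = Cmul k (L x).
Hypothesis Lb : forall h, inA0 h -> Cabs (L h) <= g * snorm h.

Lemma L_zero : L vzero = C0.
Proof. rewrite <- (vscal0 (@vzero Q)), Lscal by apply A0_zero. cxeq. Qed.

Definition ball_values : R -> Prop :=
  fun r => exists h, inA0 h /\ snorm2 h <= 1 /\ r = Re (L h).

Lemma ball_values_bound : bound ball_values.
Proof.
  exists (Rabs g). intros r [h [Hh [Hn ->]]].
  pose proof (Re_le_Cabs (L h)). pose proof (Rle_abs (Re (L h))). pose proof (Lb h Hh).
  pose proof (Rle_abs g). pose proof (Rabs_pos g).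
  assert (snorm h <= 1) by (unfold snorm; rewrite <- sqrt_1; apply sqrt_le_1_alt; auto).
  pose proof (snorm_ge0 h). nra.
Qed.

Lemma ball_values_inhabited : exists r, ball_values r.
Proof.
  exists (Re (L vzero)), vzero. split; [apply A0_zero|split; auto].
  unfold snorm2. rewrite sip_zerol. simpl. lra.
Qed.

Definition Lsup : R := proj1_sig (completeness _ ball_values_bound ball_values_inhabited).

Lemma Lsup_lub : is_lub ball_values Lsup.
Proof. unfold Lsup. destruct completeness. auto. Qed.

Lemma Lsup_ge0 : 0 <= Lsup.
Proof.
  apply (proj1 Lsup_lub). exists vzero. split; [apply A0_zero|].
  unfold snorm2. rewrite sip_zerol, L_zero. simpl. split; lra.
Qed.

Lemma ReL_le_Lsup u : inA0 u -> Re (L u) <= Lsup * snorm u.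
Proof.
  intro Hu. pose proof Lsup_ge0. pose proof (snorm_ge0 u).
  destruct (Req_dec (snorm u) 0) as [Z|Z].
  - pose proof (Lb u Hu). rewrite Z in *. pose proof (Re_le_Cabs (L u)).
    pose proof (Rle_abs (Re (L u))). nra.
  - set (u' := vscal (mkC (/ snorm u) 0) u).
    assert (Hin : ball_values (Re (L u'))).
    { exists u'. split; [apply A0_scal; auto|split; auto].
      unfold u'. rewrite snorm2_scal by auto. simpl.
      rewrite <- snorm_sq by auto. right. field. lra. }
    pose proof (proj1 Lsup_lub _ Hin) as U.
    unfold u' in U. rewrite Lscal in U by auto. simpl in U.
    replace (/ snorm u * Re (L u) - 0 * Im (L u)) with (Re (L u) / snorm u) in U by (field; lra).
    apply (Rmult_le_compat_r (snorm u)) in U; [|lra].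
    replace (Re (L u) / snorm u * snorm u) with (Re (L u)) in U by (field; lra). lra.
Qed.

Definition tol (n : nat) : R := / (INR n + 1).

Lemma tol_pos n : 0 < tol n.
Proof. unfold tol. apply Rinv_0_lt_compat. pose proof (pos_INR n). lra. Qed.

Lemma nearly_maximal n : exists x, inA0 x /\ snorm2 x <= 1 /\ Lsup - tol n < Re (L x).
Proof.
  apply NNPP. intro N.
  assert (UB : is_upper_bound ball_values (Lsup - tol n)).
  { intros r [h [Hh [Hn ->]]]. apply Rnot_lt_le. intro C. apply N. exists h. auto. }
  pose proof (proj2 Lsup_lub _ UB). pose proof (tol_pos n). lra.
Qed.

Definition maximizer (n : nat) : Q :=
  epsilon (inhabits vzero) (fun x => inA0 x /\ snorm2 x <= 1 /\ Lsup - tol n < Re (L x)).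

Lemma maximizer_spec n :
  inA0 (maximizer n) /\ snorm2 (maximizer n) <= 1 /\ Lsup - tol n < Re (L (maximizer n)).
Proof. unfold maximizer. apply epsilon_spec, nearly_maximal. Qed.

Definition riesz_seq (n : nat) : Q := vscal (mkC Lsup 0) (maximizer n).

Lemma riesz_seq_A0 n : inA0 (riesz_seq n).
Proof. apply A0_scal, maximizer_spec. Qed.

Lemma maximizer_sub m n :
  Lsup * Lsup * snorm2 (vsub (maximizer m) (maximizer n)) <= 4 * Lsup * (tol m + tol n).
Proof.
  destruct (maximizer_spec m) as [Am [Nm Lm]]. destruct (maximizer_spec n) as [An [Nn Ln]].
  pose proof (snorm2_parallelogram _ _ Am An).
  pose proof (ReL_le_Lsup _ (A0_add _ _ Am An)) as LMs. rewrite Ladd in LMs by auto. simpl in LMs.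
  pose proof (snorm_sq _ (A0_add _ _ Am An)). pose proof (snorm_ge0 (vadd (maximizer m) (maximizer n))).
  pose proof (snorm2_ge0 _ (A0_sub _ _ Am An)).
  pose proof Lsup_ge0. pose proof (tol_pos m). pose proof (tol_pos n).
  set (s := snorm (vadd (maximizer m) (maximizer n))) in *.
  set (D := snorm2 (vsub (maximizer m) (maximizer n))) in *.
  assert (D <= 4 - s * s) by lra.
  assert (2 * Lsup - (tol m + tol n) < Lsup * s) by lra.
  set (d := tol m + tol n) in *.
  destruct (Rle_dec 0 (2 * Lsup - d)) as [C|C].
  - assert ((2 * Lsup - d) * (2 * Lsup - d) <= (Lsup * s) * (Lsup * s)) by (apply Rmult_le_compat; lra).
    assert (Lsup * Lsup * D <= Lsup * Lsup * (4 - s * s)) by (apply Rmult_le_compat_l; nra).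
    nra.
  - assert (Lsup * Lsup * D <= Lsup * Lsup * 4) by (apply Rmult_le_compat_l; nra).
    nra.
Qed.

Lemma riesz_seq_cauchy : A0_cauchy riesz_seq.
Proof.
  intros eps Heps. pose proof Lsup_ge0.
  destruct (inv_succ_lt (eps / (8 * Lsup + 1))) as [N HN]; [apply Rdiv_lt_0_compat; lra|].
  exists N. intros m n Hm Hn.
  unfold riesz_seq. rewrite <- vscal_sub, snorm2_scal by (apply A0_sub; apply maximizer_spec).
  simpl. pose proof (maximizer_sub m n). pose proof (HN m Hm). pose proof (HN n Hn).
  fold (tol m) (tol n) in *. pose proof (tol_pos m). pose proof (tol_pos n).
  pose proof (div_succ_mul_lt eps (8 * Lsup) Heps ltac:(lra)). nra.
Qed.

(* Since [x_n] is nearly maximal, moving it by [t h] cannot raise [Re L] much. *)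
Lemma first_variation h n t : inA0 h ->
  t * (Re (L h) - Lsup * Re (sip h (maximizer n))) < tol n + Lsup * t * t * snorm2 h / 2.
Proof.
  intro Hh. destruct (maximizer_spec n) as [Ax [Nx Lx]].
  set (x := maximizer n) in *.
  set (u := vadd x (vscal (mkC t 0) h)).
  assert (Au : inA0 u) by (apply A0_add; auto; apply A0_scal; auto).
  pose proof (ReL_le_Lsup u Au) as LMu.
  unfold u in LMu. rewrite Ladd, Lscal in LMu by (auto; apply A0_scal; auto). simpl in LMu.
  assert (En : snorm2 u = snorm2 x + 2 * t * Re (sip h x) + t * t * snorm2 h).
  { unfold snorm2, u. rewrite sip_expand, (sip_sym h x) by auto. simpl.
    rewrite (sip_self_real h Hh). ring. }
  pose proof (snorm2_ge0 u Au). pose proof (snorm2_ge0 h Hh). pose proof Lsup_ge0.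
  assert (snorm u <= 1 + t * Re (sip h x) + t * t * snorm2 h / 2).
  { unfold snorm. apply Rle_trans with (sqrt (1 + 2 * t * Re (sip h x) + t * t * snorm2 h)).
    - apply sqrt_le_1_alt. lra.
    - eapply Rle_trans; [apply sqrt_le_half_succ; lra|lra]. }
  assert (Lsup * snorm u <= Lsup * (1 + t * Re (sip h x) + t * t * snorm2 h / 2))
    by (apply Rmult_le_compat_l; auto).
  unfold u in *. nra.
Qed.

Lemma riesz_seq_Re_cvg h : inA0 h -> Un_cv (fun n => Re (sip h (riesz_seq n))) (Re (L h)).
Proof.
  intros Hh eta Heta. pose proof Lsup_ge0. pose proof (snorm2_ge0 h Hh).
  set (K := Lsup * snorm2 h).
  assert (HK : 0 <= K) by (unfold K; nra).
  set (dl := eta / (2 * (K + 1))).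
  assert (Hdl : 0 < dl) by (unfold dl; apply Rdiv_lt_0_compat; lra).
  assert (Kd : K * dl < eta / 2).
  { unfold dl. replace (K * (eta / (2 * (K + 1)))) with (eta / 2 / (K + 1) * K) by (field; lra).
    apply div_succ_mul_lt; lra. }
  destruct (inv_succ_lt (eta * dl / 2)) as [N HN]; [nra|].
  exists N. intros n Hn. specialize (HN n Hn). fold (tol n) in HN.
  unfold Rdist, riesz_seq. rewrite sip_scalr by auto. simpl.
  replace (Lsup * Re (sip h (maximizer n)) - - 0 * Im (sip h (maximizer n)) - Re (L h))
    with (- (Re (L h) - Lsup * Re (sip h (maximizer n)))) by ring.
  rewrite Rabs_Ropp.
  pose proof (first_variation h n dl Hh) as P1. pose proof (first_variation h n (- dl) Hh) as P2.
  replace (Lsup * dl * dl * snorm2 h / 2) with (K * dl * dl / 2) in P1 by (unfold K; field).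
  replace (Lsup * - dl * - dl * snorm2 h / 2) with (K * dl * dl / 2) in P2 by (unfold K; field).
  assert (tol n + K * dl * dl / 2 < eta * dl) by nra.
  apply Rabs_def1; apply (Rmult_lt_reg_l dl); auto; lra.
Qed.

Lemma riesz_approximation :
  exists y : nat -> Q, (forall n, inA0 (y n)) /\ A0_cauchy y /\
    forall h, inA0 h -> clim (fun n => sip h (y n)) (L h).
Proof.
  exists riesz_seq. split; [apply riesz_seq_A0|split; [apply riesz_seq_cauchy|]].
  intros h Hh. split; [apply riesz_seq_Re_cvg; auto|].
  set (h' := vscal (mkC 0 (-1)) h).
  pose proof (riesz_seq_Re_cvg h' (A0_scal _ _ Hh)) as R'.
  unfold h' in R'. rewrite Lscal in R' by auto. simpl in R'.
  replace (0 * Re (L h) - -1 * Im (L h)) with (Im (L h)) in R' by ring.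
  eapply Un_cv_ext; [|exact R']. intro n. simpl. rewrite sip_scall by apply riesz_seq_A0. simpl. ring.
Qed.

End Riesz.


(** * The completion *)

Lemma cauchy_snorm y : (forall n, inA0 (y n)) -> A0_cauchy y ->
  forall eps, 0 < eps -> exists N, forall m n, (N <= m)%nat -> (N <= n)%nat ->
    snorm (vsub (y m) (y n)) < eps.
Proof.
  intros Hy Hc eps He'. destruct (Hc (eps * eps)) as [N HN]; [nra|].
  exists N. intros. apply snorm_lt; auto. apply A0_sub; auto.
Qed.

Lemma cauchy_bounded y : (forall n, inA0 (y n)) -> A0_cauchy y ->
  exists B, 0 <= B /\ forall n, snorm (y n) <= B.
Proof.
  intros Hy Hc. destruct (Hc 1) as [N HN]; [lra|].
  destruct (finite_prefix_bounded (fun n => snorm2 (y n)) N) as [B0 HB0].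
  exists (sqrt (Rmax B0 (2 + 2 * snorm2 (y N)))). split; [apply sqrt_pos|].
  intro n. unfold snorm. apply sqrt_le_1_alt.
  destruct (Nat.lt_ge_cases n N) as [Lt|Ge].
  - apply Rle_trans with B0; [apply HB0; auto|apply Rmax_l].
  - apply Rle_trans with (2 + 2 * snorm2 (y N)); [|apply Rmax_r].
    rewrite <- (vsub_add_cancel (y n) (y N)).
    pose proof (snorm2_add_le _ _ (A0_sub _ _ (Hy n) (Hy N)) (Hy N)).
    specialize (HN n N Ge (le_n N)). lra.
Qed.

Lemma cauchy_sip_cvg y h : (forall n, inA0 (y n)) -> A0_cauchy y -> inA0 h ->
  exists l, clim (fun n => sip (y n) h) l.
Proof.
  intros Hy Hc Hh. apply clim_of_cauchy. intros eps He'. pose proof (snorm_ge0 h).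
  destruct (cauchy_snorm y Hy Hc (eps / (snorm h + 1))) as [N HN]; [apply Rdiv_lt_0_compat; lra|].
  exists N. intros m n Hm Hn. rewrite <- sip_subl by auto.
  pose proof (sip_cauchy_schwarz _ _ (A0_sub _ _ (Hy m) (Hy n)) Hh).
  specialize (HN m n Hm Hn). pose proof (snorm_ge0 (vsub (y m) (y n))).
  pose proof (div_succ_mul_lt eps (snorm h) He' ltac:(lra)). nra.
Qed.

Lemma cauchy_sip_pair_cvg y z : (forall n, inA0 (y n)) -> A0_cauchy y ->
  (forall n, inA0 (z n)) -> A0_cauchy z -> exists l, clim (fun n => sip (y n) (z n)) l.
Proof.
  intros Ay Cy Az Cz. apply clim_of_cauchy. intros eps He'.
  destruct (cauchy_bounded y Ay Cy) as [By [HBy Hy]].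
  destruct (cauchy_bounded z Az Cz) as [Bz [HBz Hz]].
  destruct (cauchy_snorm y Ay Cy (eps / 2 / (Bz + 1))) as [N1 HN1]; [apply Rdiv_lt_0_compat; lra|].
  destruct (cauchy_snorm z Az Cz (eps / 2 / (By + 1))) as [N2 HN2]; [apply Rdiv_lt_0_compat; lra|].
  exists (max N1 N2). intros m n Hm Hn.
  replace (Cadd (sip (y m) (z m)) (Copp (sip (y n) (z n)))) with
    (Cadd (Cadd (sip (y m) (z m)) (Copp (sip (y n) (z m))))
          (Cadd (sip (y n) (z m)) (Copp (sip (y n) (z n))))) by (unfold Copp; cxeq).
  rewrite <- sip_subl, <- sip_subr by auto.
  eapply Rle_lt_trans; [apply Cabs_triangle|].
  pose proof (sip_cauchy_schwarz _ _ (A0_sub _ _ (Ay m) (Ay n)) (Az m)).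
  pose proof (sip_cauchy_schwarz _ _ (Ay n) (A0_sub _ _ (Az m) (Az n))).
  specialize (HN1 m n ltac:(lia) ltac:(lia)). specialize (HN2 m n ltac:(lia) ltac:(lia)).
  pose proof (Hy n). pose proof (Hz m). pose proof (snorm_ge0 (y n)). pose proof (snorm_ge0 (z m)).
  pose proof (snorm_ge0 (vsub (y m) (y n))). pose proof (snorm_ge0 (vsub (z m) (z n))).
  pose proof (div_succ_mul_lt (eps / 2) Bz ltac:(lra) HBz).
  pose proof (div_succ_mul_lt (eps / 2) By ltac:(lra) HBy).
  nra.
Qed.

(* The completion of A0 modulo null vectors, realized without quotients: a
   point is a functional [F] on A0 that is the pointwise limit of [sip (y n)]
   for an A0-Cauchy sequence [y]; [F] is normalized to [C0] off A0. *)
Definition represents (y : nat -> Q) (F : Q -> Cx) : Prop :=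
  (forall n, inA0 (y n)) /\ A0_cauchy y /\
  (forall h, inA0 h -> clim (fun n => sip (y n) h) (F h)) /\ (forall h, ~ inA0 h -> F h = C0).

Definition limit_functional (y : nat -> Q) : Q -> Cx := fun h =>
  if excluded_middle_informative (inA0 h) then climv (fun n => sip (y n) h) else C0.

Lemma represents_limit_functional y : (forall n, inA0 (y n)) -> A0_cauchy y ->
  represents y (limit_functional y).
Proof.
  intros Hy Hc. split; [auto|split; [auto|split]]; intros h Hh;
    unfold limit_functional; destruct (excluded_middle_informative (inA0 h)); try contradiction; auto.
  destruct (cauchy_sip_cvg y h Hy Hc Hh) as [l Hl]. rewrite (climv_spec _ l Hl). auto.
Qed.

Lemma represents_add {y z F G} : represents y F -> represents z G ->
  represents (fun n => vadd (y n) (z n)) (fun h => Cadd (F h) (G h)).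
Proof.
  intros [Ay [Cy [Ly Oy]]] [Az [Cz [Lz Oz]]].
  split; [intro n; apply A0_add; auto|split; [|split]].
  - intros eps He'. destruct (Cy (eps / 4)) as [N1 HN1]; [lra|].
    destruct (Cz (eps / 4)) as [N2 HN2]; [lra|].
    exists (max N1 N2). intros m n Hm Hn. rewrite vsub_addadd.
    eapply Rle_lt_trans; [apply snorm2_add_le; apply A0_sub; auto|].
    specialize (HN1 m n ltac:(lia) ltac:(lia)). specialize (HN2 m n ltac:(lia) ltac:(lia)). lra.
  - intros h Hh. eapply clim_ext; [|apply clim_add; [apply Ly|apply Lz]; auto].
    intro n. simpl. rewrite sip_addl by auto. auto.
  - intros h Hh. rewrite Oy, Oz by auto. cxeq.
Qed.

Lemma represents_scal k {y F} : represents y F ->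
  represents (fun n => vscal k (y n)) (fun h => Cmul k (F h)).
Proof.
  intros [Ay [Cy [Ly Oy]]].
  split; [intro n; apply A0_scal; auto|split; [|split]].
  - intros eps He'. set (K := Re k * Re k + Im k * Im k).
    assert (HK : 0 <= K) by (unfold K; nra).
    destruct (Cy (eps / (K + 1))) as [N HN]; [apply Rdiv_lt_0_compat; lra|].
    exists N. intros m n Hm Hn. rewrite <- vscal_sub, snorm2_scal by (apply A0_sub; auto). fold K.
    specialize (HN m n Hm Hn). pose proof (snorm2_ge0 _ (A0_sub _ _ (Ay m) (Ay n))).
    pose proof (div_succ_mul_lt eps K He' HK). nra.
  - intros h Hh. eapply clim_ext; [|apply clim_scal; apply Ly; auto].
    intro n. simpl. rewrite sip_scall by auto. auto.
  - intros h Hh. rewrite Oy by auto. cxeq.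
Qed.

Definition sip_functional (b : Q) : Q -> Cx := fun h =>
  if excluded_middle_informative (inA0 h) then sip b h else C0.

Lemma represents_const {x} : inA0 x -> represents (fun _ => x) (sip_functional x).
Proof.
  intro Hx. split; [auto|split; [|split]].
  - intros eps He'. exists 0%nat. intros. rewrite vsub_self. unfold snorm2. rewrite sip_zerol. simpl. lra.
  - intros h Hh. unfold sip_functional.
    destruct (excluded_middle_informative (inA0 h)); [apply clim_const|contradiction].
  - intros h Hh. unfold sip_functional.
    destruct (excluded_middle_informative (inA0 h)); [contradiction|auto].
Qed.

(* Every [b] in A, not only in A0, gives a point of the completion: this is
   where (L.3) enters. *)
Lemma represents_sip_functional b : exists y, represents y (sip_functional b).
Proof.
  destruct (sip_bounded b) as [g [Hg Hb]].
  destruct (riesz_approximation (fun h => sip h b) g) as [y [Ay [Cy Ly]]]; auto.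
  { intros. apply sip_addl_A0; auto. }
  { intros. apply sip_scall_A0; auto. }
  exists y. split; [auto|split; [auto|split]]; intros h Hh; unfold sip_functional;
    destruct (excluded_middle_informative (inA0 h)); try contradiction; auto.
  pose proof (clim_conj _ _ (Ly h Hh)) as P. rewrite (sip_sym b h Hh) in P.
  replace (Cconj (Cconj (sip b h))) with (sip b h) in P by cxeq.
  eapply clim_ext; [|exact P]. intro n. simpl. rewrite (sip_sym (y n) h) by auto. cxeq.
Qed.

Definition is_limit_functional (F : Q -> Cx) : Prop := exists y, represents y F.
Definition gns_space : Type := {F : Q -> Cx | is_limit_functional F}.
Definition gfun (u : gns_space) : Q -> Cx := proj1_sig u.

Lemma gns_space_eq (u v : gns_space) : (forall h, gfun u h = gfun v h) -> u = v.
Proof.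
  destruct u as [f pf], v as [g pg]. unfold gfun; simpl. intro E.
  apply functional_extensionality in E. subst g. f_equal. apply proof_irrelevance.
Qed.

Lemma is_limit_functional_zero : is_limit_functional (fun _ => C0).
Proof.
  exists (fun _ => vzero). replace (fun _ : Q => C0) with (sip_functional vzero).
  - apply represents_const, A0_zero.
  - apply functional_extensionality. intro h. unfold sip_functional.
    destruct (excluded_middle_informative (inA0 h)); auto. apply sip_zerol.
Qed.

Lemma is_limit_functional_add (u v : gns_space) :
  is_limit_functional (fun h => Cadd (gfun u h) (gfun v h)).
Proof.
  destruct (proj2_sig u) as [y Hy], (proj2_sig v) as [z Hz].
  eexists. exact (represents_add Hy Hz).
Qed.

Lemma is_limit_functional_scal k (u : gns_space) : is_limit_functional (fun h => Cmul k (gfun u h)).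
Proof. destruct (proj2_sig u) as [y Hy]. eexists. exact (represents_scal k Hy). Qed.

Definition gzero : gns_space := exist _ _ is_limit_functional_zero.
Definition gadd (u v : gns_space) : gns_space := exist _ _ (is_limit_functional_add u v).
Definition gscal k (u : gns_space) : gns_space := exist _ _ (is_limit_functional_scal k u).

Ltac gns_eq := apply gns_space_eq; intro; unfold gfun; simpl; unfold gfun; cxeq.

Definition gns_cvs : CVS := {|
  vcar := gns_space; vadd := gadd; vzero := gzero; vopp := gscal (mkC (-1) 0); vscal := gscal;
  vaddA := ltac:(intros; gns_eq); vaddC := ltac:(intros; gns_eq);
  vadd0 := ltac:(intros; gns_eq); vaddN := ltac:(intros; gns_eq);
  vscal1 := ltac:(intros; gns_eq); vscalA := ltac:(intros; gns_eq);
  vscalDr := ltac:(intros; gns_eq); vscalDl := ltac:(intros; gns_eq) |}.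

Definition repr_seq (u : gns_space) : nat -> Q :=
  epsilon (inhabits (fun _ => vzero)) (fun y => represents y (gfun u)).

Lemma repr_seq_spec u : represents (repr_seq u) (gfun u).
Proof. unfold repr_seq. apply epsilon_spec, (proj2_sig u). Qed.

Lemma represents_approx z F y : represents z F -> (forall n, inA0 (y n)) -> A0_cauchy y ->
  clim (fun n => Cadd (F (y n)) (Copp (sip (z n) (y n)))) C0.
Proof.
  intros [Az [Cz [Lz Oz]]] Ay Cy.
  destruct (cauchy_bounded y Ay Cy) as [By [HBy Hy]].
  apply clim0_of_parts. intros eps He'.
  destruct (cauchy_snorm z Az Cz (eps / (By + 1))) as [N HN]; [apply Rdiv_lt_0_compat; lra|].
  exists N. intros n Hn.
  assert (B : forall m, (N <= m)%nat ->
            Cabs (Cadd (sip (z m) (y n)) (Copp (sip (z n) (y n)))) <= eps).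
  { intros m Hm. rewrite <- sip_subl by auto.
    pose proof (sip_cauchy_schwarz _ _ (A0_sub _ _ (Az m) (Az n)) (Ay n)).
    specialize (HN m n Hm Hn). pose proof (Hy n). pose proof (snorm_ge0 (y n)).
    pose proof (snorm_ge0 (vsub (z m) (z n))).
    pose proof (div_succ_mul_lt eps By He' HBy). nra. }
  destruct (Lz (y n) (Ay n)) as [LR LI]. simpl.
  split; [apply (Un_cv_dist_le _ _ _ _ N LR)|apply (Un_cv_dist_le _ _ _ _ N LI)];
    intros m Hm; specialize (B m Hm);
    [pose proof (Re_le_Cabs (Cadd (sip (z m) (y n)) (Copp (sip (z n) (y n)))))
    |pose proof (Im_le_Cabs (Cadd (sip (z m) (y n)) (Copp (sip (z n) (y n)))))];
    simpl in *; unfold Rminus; lra.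
Qed.

Definition gns_inner (u v : gns_cvs) : Cx := climv (fun n => sip (repr_seq u n) (repr_seq v n)).

Lemma gns_inner_cvg u v z y : represents z (gfun u) -> represents y (gfun v) ->
  clim (fun n => sip (z n) (y n)) (gns_inner u v).
Proof.
  intros Rz Ry. pose proof (repr_seq_spec u) as Rr. pose proof (repr_seq_spec v) as Rs.
  set (r := repr_seq u) in *. set (s := repr_seq v) in *.
  pose proof Rz as [Az [Cz _]]. pose proof Ry as [Ay [Cy _]].
  pose proof Rr as [Ar [Cr _]]. pose proof Rs as [As [Cs _]].
  assert (A : clim (fun n => sip (r n) (s n)) (gns_inner u v)).
  { destruct (cauchy_sip_pair_cvg r s Ar Cr As Cs) as [l Hl].
    unfold gns_inner. fold r s. rewrite (climv_spec _ l Hl). auto. }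
  (* [<z_n, y_n> - <r_n, s_n>] splits into four [represents_approx] errors *)
  pose proof (represents_approx z (gfun u) y Rz Ay Cy) as B1.
  pose proof (represents_approx r (gfun u) y Rr Ay Cy) as B2.
  pose proof (represents_approx y (gfun v) r Ry Ar Cr) as C1.
  pose proof (represents_approx s (gfun v) r Rs Ar Cr) as C2.
  apply (clim_of_sub0 _ _ _ A). eapply clim_ext;
    [|exact (clim0_add _ _ (clim0_add _ _ B2 (clim0_opp _ B1))
                       (clim0_conj _ (clim0_add _ _ C2 (clim0_opp _ C1))))].
  intro n. simpl. rewrite (sip_sym (y n) (r n) (Ar n)), (sip_sym (s n) (r n) (Ar n)).
  unfold Copp. cxeq.
Qed.

Lemma gns_inner_addl (u u' v : gns_space) :
  gns_inner (gadd u u') v = Cadd (gns_inner u v) (gns_inner u' v).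
Proof.
  pose proof (repr_seq_spec u) as Ru. pose proof (repr_seq_spec u') as Ru'.
  pose proof (repr_seq_spec v) as Rv.
  apply (clim_unique _ _ _ (gns_inner_cvg (gadd u u') v _ _ (represents_add Ru Ru') Rv)).
  eapply clim_ext; [|exact (clim_add _ _ _ _ (gns_inner_cvg u v _ _ Ru Rv) (gns_inner_cvg u' v _ _ Ru' Rv))].
  intro n. simpl. rewrite sip_addl by apply (proj1 Rv). auto.
Qed.

Lemma gns_inner_scall k (u v : gns_space) : gns_inner (gscal k u) v = Cmul k (gns_inner u v).
Proof.
  pose proof (repr_seq_spec u) as Ru. pose proof (repr_seq_spec v) as Rv.
  apply (clim_unique _ _ _ (gns_inner_cvg (gscal k u) v _ _ (represents_scal k Ru) Rv)).
  eapply clim_ext; [|exact (clim_scal k _ _ (gns_inner_cvg u v _ _ Ru Rv))].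
  intro n. simpl. rewrite sip_scall by apply (proj1 Rv). auto.
Qed.

Lemma gns_inner_sym (u v : gns_space) : gns_inner v u = Cconj (gns_inner u v).
Proof.
  pose proof (repr_seq_spec u) as Ru. pose proof (repr_seq_spec v) as Rv.
  apply (clim_unique _ _ _ (gns_inner_cvg v u _ _ Rv Ru)).
  eapply clim_ext; [|exact (clim_conj _ _ (gns_inner_cvg u v _ _ Ru Rv))].
  intro n. simpl. rewrite (sip_sym (repr_seq u n) (repr_seq v n)) by apply (proj1 Rv). auto.
Qed.

Lemma gns_inner_pos (v : gns_space) : Cnonneg (gns_inner v v).
Proof.
  pose proof (repr_seq_spec v) as Rv. destruct (gns_inner_cvg v v _ _ Rv Rv) as [PR PI].
  split.
  - eapply UL_sequence; [exact PI|]. eapply Un_cv_ext; [|apply (Un_cv_const 0)].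
    intro n. simpl. rewrite sip_self_real by apply (proj1 Rv). auto.
  - eapply Un_cv_ge0; [exact PR|]. intro n. apply snorm2_ge0, (proj1 Rv).
Qed.

Lemma gns_inner_def (v : gns_space) : gns_inner v v = C0 -> v = gzero.
Proof.
  intro E. pose proof (repr_seq_spec v) as Rv.
  pose proof (gns_inner_cvg v v _ _ Rv Rv) as [PR _]. rewrite E in PR.
  destruct Rv as [Ar [Cr [Lr Or]]].
  apply gns_space_eq. intro h. unfold gfun at 2. simpl.
  destruct (classic (inA0 h)) as [Hh|Hh]; [|apply Or; auto].
  (* [|<r_n, h>| <= |r_n| |h|] and [|r_n| -> 0] *)
  apply (clim_unique _ _ _ (Lr h Hh)). apply clim0_of_Cabs. intros eps He'.
  pose proof (snorm_ge0 h).
  set (dl := eps / (snorm h + 1)).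
  assert (Hdl : 0 < dl) by (unfold dl; apply Rdiv_lt_0_compat; lra).
  destruct (PR (dl * dl)) as [N HN]; [nra|].
  exists N. intros n Hn. specialize (HN n Hn). unfold Rdist in HN. simpl in HN.
  rewrite Rminus_0_r in HN. fold (snorm2 (repr_seq v n)) in HN.
  assert (snorm (repr_seq v n) < dl).
  { apply snorm_lt; auto. pose proof (Rle_abs (snorm2 (repr_seq v n))). lra. }
  pose proof (sip_cauchy_schwarz _ _ (Ar n) Hh). pose proof (snorm_ge0 (repr_seq v n)).
  pose proof (div_succ_mul_lt eps (snorm h) He' H). unfold dl in *. nra.
Qed.

Lemma gns_inner_product : @is_inner_product gns_cvs gns_inner.
Proof.
  constructor; [exact gns_inner_addl|exact gns_inner_scall|exact gns_inner_sym
               |exact gns_inner_pos|exact gns_inner_def].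
Qed.

Local Notation gnorm := (@ipnorm gns_cvs gns_inner).

Definition lam (b : Q) : gns_cvs := exist _ (sip_functional b) (represents_sip_functional b).

Lemma lam_add a b : lam (vadd a b) = vadd (lam a) (lam b).
Proof.
  apply gns_space_eq. intro h. unfold gfun, lam, sip_functional; simpl.
  destruct (excluded_middle_informative (inA0 h)); [apply sip_addl; auto|cxeq].
Qed.

Lemma lam_scal k a : lam (vscal k a) = vscal k (lam a).
Proof.
  apply gns_space_eq. intro h. unfold gfun, lam, sip_functional; simpl.
  destruct (excluded_middle_informative (inA0 h)); [apply sip_scall; auto|cxeq].
Qed.

Lemma lam_sub a b : lam (vsub a b) = vsub (lam a) (lam b).
Proof. unfold vsub at 1. rewrite vopp_scal, lam_add, lam_scal. reflexivity. Qed.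

Lemma lam_zero : lam vzero = vzero.
Proof. rewrite <- (vscal0 (@vzero Q)), lam_scal. apply vscal0. Qed.

Lemma gns_inner_lam_r u h : inA0 h -> gns_inner u (lam h) = gfun u h.
Proof.
  intro Hh. pose proof (repr_seq_spec u) as Ru.
  apply (clim_unique _ _ _ (gns_inner_cvg u (lam h) _ _ Ru (represents_const Hh))).
  exact (proj1 (proj2 (proj2 Ru)) h Hh).
Qed.

Lemma gns_inner_lam b h : inA0 h -> gns_inner (lam b) (lam h) = sip b h.
Proof.
  intro Hh. rewrite gns_inner_lam_r by auto. unfold gfun, lam, sip_functional; simpl.
  destruct (excluded_middle_informative (inA0 h)); [auto|contradiction].
Qed.

Lemma snorm2_sub_lam a b : inA0 a -> inA0 b ->
  snorm2 (vsub a b) = gnorm (vsub (lam a) (lam b)) * gnorm (vsub (lam a) (lam b)).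
Proof.
  intros. rewrite (ipnorm_sq gns_inner_product), <- lam_sub, gns_inner_lam by (apply A0_sub; auto).
  reflexivity.
Qed.

Lemma lam_repr_cvg {u : gns_cvs} {z} : represents z (gfun u) ->
  forall eps, 0 < eps -> exists N, forall n, (N <= n)%nat -> gnorm (vsub u (lam (z n))) < eps.
Proof.
  intros Rz eps Heps. pose proof Rz as [Az [Cz _]].
  destruct (Cz (eps * eps / 4)) as [N HN]; [nra|].
  exists N. intros n Hn'.
  (* [u - lam (z n)] is represented by [z m - z n] *)
  pose proof (represents_add Rz (represents_scal (mkC (-1) 0) (represents_const (Az n)))) as R2.
  pose proof (gns_inner_cvg (vsub u (lam (z n))) (vsub u (lam (z n))) _ _ R2 R2) as [PR _].
  assert (B : Rabs (Re (gns_inner (vsub u (lam (z n))) (vsub u (lam (z n)))) - 0) <= eps * eps / 4).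
  { apply (Un_cv_dist_le _ _ _ _ N PR). intros m Hm. simpl.
    rewrite <- (vopp_scal (z n)). fold (vsub (z m) (z n)) (snorm2 (vsub (z m) (z n))).
    pose proof (snorm2_ge0 _ (A0_sub _ _ (Az m) (Az n))). specialize (HN m n Hm Hn').
    rewrite Rminus_0_r, Rabs_right by lra. lra. }
  rewrite Rminus_0_r, <- (ipnorm_sq gns_inner_product) in B.
  pose proof (ipnorm_ge0 gns_inner (vsub u (lam (z n)))).
  rewrite Rabs_right in B by nra. nra.
Qed.

Lemma lam_dense (u : gns_cvs) eps : 0 < eps ->
  exists x, inA0 x /\ gnorm (vsub u (lam x)) < eps.
Proof.
  intro Heps. pose proof (repr_seq_spec u) as R.
  destruct (lam_repr_cvg R eps Heps) as [N HN].
  exists (repr_seq u N). split; [apply (proj1 R)|apply HN; auto].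
Qed.

Lemma approximating_seq_cauchy (f : nat -> gns_cvs) (x : nat -> Q) :
  ip_cauchy gns_inner f -> (forall k, inA0 (x k)) ->
  (forall k, gnorm (vsub (f k) (lam (x k))) < / (INR k + 1)) -> A0_cauchy x.
Proof.
  intros Cf Ax Xk eps He'. set (dl := sqrt eps).
  assert (Hdl : 0 < dl) by (apply sqrt_lt_R0; auto).
  destruct (Cf (dl / 3)) as [N1 HN1]; [lra|].
  destruct (inv_succ_lt (dl / 3)) as [N2 HN2]; [lra|].
  exists (max N1 N2). intros m n Hm Hn. rewrite snorm2_sub_lam by auto.
  assert (gnorm (vsub (lam (x m)) (lam (x n))) < dl).
  { eapply Rle_lt_trans; [apply (ipnorm_sub_triangle gns_inner_product _ (f m))|].
    eapply Rle_lt_trans;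
      [apply Rplus_le_compat_l, (ipnorm_sub_triangle gns_inner_product _ (f n))|].
    rewrite (ipnorm_sub_sym gns_inner_product (lam (x m))).
    specialize (HN1 m n ltac:(lia) ltac:(lia)). pose proof (Xk m). pose proof (Xk n).
    specialize (HN2 m ltac:(lia)) as E1. specialize (HN2 n ltac:(lia)) as E2. lra. }
  pose proof (ipnorm_ge0 gns_inner (vsub (lam (x m)) (lam (x n)))).
  assert (dl * dl = eps) by (apply sqrt_sqrt; lra). nra.
Qed.

Lemma gns_complete (f : nat -> gns_cvs) : ip_cauchy gns_inner f -> exists v, ip_converges gns_inner f v.
Proof.
  intro Cf.
  set (x := fun k => epsilon (inhabits vzero)
              (fun x => inA0 x /\ gnorm (vsub (f k) (lam x)) < / (INR k + 1))).
  assert (Xs : forall k, inA0 (x k) /\ gnorm (vsub (f k) (lam (x k))) < / (INR k + 1)).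
  { intro k. apply epsilon_spec, lam_dense. apply Rinv_0_lt_compat. pose proof (pos_INR k). lra. }
  assert (Ax : forall k, inA0 (x k)) by apply Xs.
  pose proof (represents_limit_functional x Ax
                (approximating_seq_cauchy f x Cf Ax (fun k => proj2 (Xs k)))) as Rv.
  set (v := exist _ _ (ex_intro _ x Rv) : gns_cvs).
  exists v. intros eps He'.
  destruct (inv_succ_lt (eps / 2)) as [N1 HN1]; [lra|].
  destruct (@lam_repr_cvg v x Rv (eps / 2)) as [N2 HN2]; [lra|].
  exists (max N1 N2). intros n Hn.
  eapply Rle_lt_trans; [apply (ipnorm_sub_triangle gns_inner_product _ (lam (x n)))|].
  rewrite (ipnorm_sub_sym gns_inner_product (lam (x n))).
  pose proof (proj2 (Xs n)). specialize (HN1 n ltac:(lia)). specialize (HN2 n ltac:(lia)). lra.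
Qed.

Definition gns_hilbert : Hilbert := {|
  hV := gns_cvs; inner := gns_inner; innerDl := gns_inner_addl; innerZl := gns_inner_scall;
  inner_sym := gns_inner_sym; inner_pos := gns_inner_pos; inner_def := gns_inner_def;
  complete := gns_complete |}.

(** * The GNS representation *)

Definition gns_domain (v : gns_hilbert) : Prop := exists x, inA0 x /\ v = lam x.

Definition domain_repr (v : gns_hilbert) : Q :=
  epsilon (inhabits vzero) (fun x => inA0 x /\ v = lam x).

Definition gns_rep (a : Q) (v : gns_hilbert) : gns_hilbert := lam (qmul a (domain_repr v)).

Lemma gns_domain_lam x : inA0 x -> gns_domain (lam x).
Proof. intro. exists x; auto. Qed.

(* [lam x = lam x'] means that [x - x'] is a null vector, and null vectors are
   annihilated by every [sip _ c] thanks to (L.3). *)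
Lemma lam_qmul_compat a x x' : inA0 x -> inA0 x' -> lam x = lam x' ->
  lam (qmul a x) = lam (qmul a x').
Proof.
  intros Hx Hx' E.
  assert (N0 : snorm2 (vsub x x') = 0).
  { assert (F : gfun (lam x) (vsub x x') = gfun (lam x') (vsub x x')) by (rewrite E; auto).
    unfold gfun, lam, sip_functional in F; simpl in F.
    destruct (excluded_middle_informative (inA0 (vsub x x'))) as [_|C];
      [|exfalso; apply C, A0_sub; auto].
    unfold snorm2. rewrite sip_subl, F by (apply A0_sub; auto). simpl. ring. }
  apply gns_space_eq. intro h. unfold gfun, lam, sip_functional; simpl.
  destruct (excluded_middle_informative (inA0 h)) as [Hh|]; auto.
  set (c := qmul (qstar h) a).
  pose proof (sip_null_l _ (qstar c) (A0_sub _ _ Hx Hx') N0) as Z.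
  rewrite sip_subl_A0 in Z by auto.
  assert (K : forall y, inA0 y -> sip (qmul a y) h = sip y (qstar c)).
  { intros y Hy. unfold sip, c. rewrite qstarK, qmulA_xay by (auto; apply A0_star; auto). auto. }
  rewrite !K by auto.
  apply Cx_eq; [apply (f_equal Re) in Z|apply (f_equal Im) in Z]; simpl in Z; lra.
Qed.

Lemma gns_rep_lam a x : inA0 x -> gns_rep a (lam x) = lam (qmul a x).
Proof.
  intro Hx. assert (R : inA0 (domain_repr (lam x)) /\ lam x = lam (domain_repr (lam x))).
  { unfold domain_repr. apply epsilon_spec. exists x. auto. }
  symmetry. apply lam_qmul_compat; tauto.
Qed.

Lemma gns_domain_dense : dense_subspace gns_domain.
Proof.
  split; [|split; [|split]].
  - exists vzero. split; [apply A0_zero|symmetry; apply lam_zero].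
  - intros u v [x [Hx ->]] [y [Hy ->]]. exists (vadd x y).
    split; [apply A0_add; auto|symmetry; apply lam_add].
  - intros k u [x [Hx ->]]. exists (vscal k x). split; [apply A0_scal; auto|symmetry; apply lam_scal].
  - intros v eps He'. destruct (lam_dense v eps He') as [x [Hx Hv]].
    exists (lam x). split; [apply gns_domain_lam; auto|exact Hv].
Qed.

Lemma gns_rep_adj a u : gns_domain u -> is_adj gns_domain (gns_rep a) u (gns_rep (qstar a) u).
Proof.
  intros [x [Hx ->]] d [y [Hy ->]]. rewrite !gns_rep_lam by auto.
  change (gns_inner (lam (qmul a y)) (lam x) = gns_inner (lam y) (lam (qmul (qstar a) x))).
  rewrite gns_inner_lam, gns_inner_sym, gns_inner_lam by auto.
  unfold sip. pose proof (H2 x y a Hx Hy) as L.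
  rewrite !qmulA_xay in L by (auto; apply A0_star; auto). rewrite L. cxeq.
Qed.

Lemma adj_gns_rep a u : gns_domain u -> adj gns_domain (gns_rep a) u = gns_rep (qstar a) u.
Proof. intro Hu. apply (adj_eq gns_domain_dense), gns_rep_adj, Hu. Qed.

Lemma gns_rep_adj_adj a u : gns_domain u ->
  is_adj gns_domain (adj gns_domain (gns_rep a)) u (gns_rep a u).
Proof.
  intros Hu d Hd. rewrite adj_gns_rep by auto.
  pose proof (gns_rep_adj (qstar a) u Hu d Hd) as P. rewrite qstarK in P. exact P.
Qed.

Lemma gns_rep_Ldagger a : in_Ldagger gns_domain (gns_rep a).
Proof.
  split; [split|split].
  - intros u v [x [Hx ->]] [y [Hy ->]].
    change (gns_rep a (vadd (lam x) (lam y)) = vadd (gns_rep a (lam x)) (gns_rep a (lam y))).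
    rewrite <- lam_add, !gns_rep_lam by (auto; apply A0_add; auto).
    rewrite qmulDr by (right; auto). apply lam_add.
  - intros k u [x [Hx ->]]. change (gns_rep a (vscal k (lam x)) = vscal k (gns_rep a (lam x))).
    rewrite <- lam_scal, !gns_rep_lam by (auto; apply A0_scal; auto).
    rewrite qmulZr by (right; auto). apply lam_scal.
  - apply (closable_of_adjoint gns_domain_dense). intros u Hu.
    exists (gns_rep (qstar a) u). apply gns_rep_adj; auto.
  - intros u Hu. exists (gns_rep (qstar a) u). apply gns_rep_adj; auto.
Qed.

Lemma gns_rep_left_multiplier a x : inA0 x ->
  left_multiplier gns_domain (gns_rep a) (gns_rep x).
Proof.
  intro Hx. split; intros d [y [Hy ->]].
  - exists (gns_rep a (gns_rep x (lam y))). rewrite gns_rep_lam by auto.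
    apply gns_rep_adj_adj, gns_domain_lam, A0_mul; auto.
  - rewrite adj_gns_rep, gns_rep_lam by (auto; apply gns_domain_lam; auto).
    exists (lam (qmul (qstar x) (qmul (qstar a) y))).
    intros d' [z [Hz ->]]. rewrite gns_rep_lam by auto.
    change (gns_inner (lam (qmul x z)) (lam (qmul (qstar a) y))
            = gns_inner (lam z) (lam (qmul (qstar x) (qmul (qstar a) y)))).
    rewrite gns_inner_sym, gns_inner_lam, (gns_inner_sym _ (lam z)), gns_inner_lam
      by (auto; apply A0_mul; auto).
    unfold sip. rewrite qstarM, qmulA_xya by (auto; apply A0_star; auto). reflexivity.
Qed.

Lemma gns_rep_wprod a x d : inA0 x -> gns_domain d ->
  wprod gns_domain (gns_rep a) (gns_rep x) d = gns_rep (qmul a x) d.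
Proof.
  intros Hx [y [Hy ->]]. unfold wprod. rewrite gns_rep_lam by auto.
  rewrite (adj_eq gns_domain_dense _ _ _ (gns_rep_adj_adj a _ (gns_domain_lam _ (A0_mul _ _ Hx Hy)))).
  rewrite !gns_rep_lam, qmulA_axy by (auto; apply A0_mul; auto). reflexivity.
Qed.

Lemma gns_star_rep : star_rep e gns_domain gns_rep.
Proof.
  destruct He as [He0 Hu].
  split; [apply gns_domain_dense|split; [apply gns_rep_Ldagger|split; [|split; [|split; [|split]]]]].
  - intros a b d [x [Hx ->]]. rewrite !gns_rep_lam by auto.
    rewrite qmulDl by (left; auto). apply lam_add.
  - intros k a d [x [Hx ->]]. rewrite !gns_rep_lam by auto.
    rewrite qmulZl by (right; auto). apply lam_scal.
  - intros a d Hd. symmetry. apply adj_gns_rep, Hd.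
  - intros a x Hx. split; [apply gns_rep_left_multiplier, Hx|intros d; apply gns_rep_wprod, Hx].
  - intros d [y [Hy ->]]. rewrite gns_rep_lam, (proj2 (Hu y)) by auto. reflexivity.
Qed.

Lemma w_eq_gns_inner a : w a = gns_inner (lam a) (lam e).
Proof.
  destruct He as [He0 Hu]. rewrite gns_inner_lam by auto. unfold sip.
  rewrite (unit_star e He), (proj2 (Hu a)). reflexivity.
Qed.

Lemma gns_representation : exists (H : Hilbert) (D : H -> Prop) (pi : Q -> H -> H) (zeta : H),
  star_rep e D pi /\ D zeta /\ forall a, w a = inner (pi a zeta) zeta.
Proof.
  destruct He as [He0 Hu].
  exists gns_hilbert, gns_domain, gns_rep, (lam e).
  split; [apply gns_star_rep|split; [apply gns_domain_lam; auto|]].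
  intro a. rewrite gns_rep_lam, (proj1 (Hu a)) by auto. apply w_eq_gns_inner.
Qed.

Lemma gns_form : exists Omega : Q -> Q -> Cx, in_QA0 Omega /\ forall a, w a = Omega a e.
Proof.
  exists (fun a b => gns_inner (lam a) (lam b)). split; [|exact w_eq_gns_inner].
  split; [split; [|split; [|split]]|split].
  - intros a b c. rewrite lam_add. apply gns_inner_addl.
  - intros a b c. rewrite lam_add. apply (ip_addr gns_inner_product).
  - intros k a b. rewrite lam_scal. apply gns_inner_scall.
  - intros k a b. rewrite lam_scal. apply (ip_scalr gns_inner_product).
  - intro a. apply gns_inner_pos.
  - intros a x y Hx Hy. rewrite gns_inner_lam, gns_inner_sym, gns_inner_lam by auto.
    unfold sip. pose proof (H2 x y (qstar a) Hx Hy) as L.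
    rewrite qstarK, !qmulA_xay in L by (auto; apply A0_star; auto). rewrite L. cxeq.
Qed.

Lemma gns_seminorm : exists p : Q -> R, hilbert_seminorm p /\
  forall (a x : Q), inA0 x ->
    Cabs (w (qmul (qstar a) x)) <= p a * sqrt (Re (w (qmul (qstar x) x))).
Proof.
  exists (fun a => gnorm (lam a)). split; [split; [|split; [|split]]|].
  - intro a. apply ipnorm_ge0.
  - intros a b. rewrite lam_add. apply (ipnorm_triangle gns_inner_product).
  - intros k a. rewrite lam_scal. apply (ipnorm_scal gns_inner_product).
  - intros a b. rewrite lam_add, lam_sub. apply (ipnorm_parallelogram gns_inner_product).
  - intros a x Hx. fold (sip x a). rewrite (sip_sym a x Hx), Cabs_conj, <- (gns_inner_lam a x Hx).
    fold (sip x x). rewrite <- (gns_inner_lam x x Hx). apply (cauchy_schwarz gns_inner_product).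
Qed.

End GNS.

Theorem mainTheorem1 (Q : QStarAlg) (e : Q) (w : Q -> Cx) :
  is_unit e -> lin_functional w -> L1 w -> L2 w ->
  (representable w <->
     exists (H : Hilbert) (D : H -> Prop) (pi : Q -> H -> H) (zeta : H),
       star_rep e D pi /\ D zeta /\ forall a, w a = inner (pi a zeta) zeta) /\
  (representable w <->
     exists Omega : Q -> Q -> Cx, in_QA0 Omega /\ forall a, w a = Omega a e) /\
  (representable w <->
     exists p : Q -> R, hilbert_seminorm p /\
       forall (a x : Q), inA0 x ->
         Cabs (w (qmul (qstar a) x)) <= p a * sqrt (Re (w (qmul (qstar x) x)))).
Proof.
  intros He Hw H1 H2.
  assert (Hrep : L3 w -> representable w) by (intro H3; exact (conj Hw (conj H1 (conj H2 H3)))).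
  split; [|split]; split.
  - intros [_ [_ [_ H3]]]. exact (gns_representation He Hw H1 H2 H3).
  - intros (H & D & pi & zeta & Hpi & Hz & Hwz). exact (Hrep (L3_of_star_rep Hpi Hz Hwz)).
  - intros [_ [_ [_ H3]]]. exact (gns_form He Hw H1 H2 H3).
  - intros (Om & HOm & HwOm). exact (Hrep (L3_of_QA0 He HOm HwOm)).
  - intros [_ [_ [_ H3]]]. exact (gns_seminorm He Hw H1 H2 H3).
  - intros (p & Hp & Hb). exact (Hrep (L3_of_hilbert_seminorm Hp Hb)).
Qed.
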